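(* The following four rules are admissible in $\mathbf{CL12}$ (whenever all premises are provable, so is the conclusion), where $y$ is a variable not occurring in the conclusion: $\sqcap$-Introduction: from $\vec E\circ\!\!-\,F^{\vee}[G_0]$ and $\vec E\circ\!\!-\,F^{\vee}[G_1]$ infer $\vec E\circ\!\!-\,F^{\vee}[G_0\sqcap G_1]$; $\sqcup$-Introduction: from $\vec E,F^{\wedge}[G_0],\vec K\circ\!\!-\,H$ and $\vec E,F^{\wedge}[G_1],\vec K\circ\!\!-\,H$ infer $\vec E,F^{\wedge}[G_0\sqcup G_1],\vec K\circ\!\!-\,H$; $\sqcap x$-Introduction: from $\vec E\circ\!\!-\,F^{\vee}[G(y)]$ infer $\vec E\circ\!\!-\,F^{\vee}[\sqcap xG(x)]$; $\sqcup x$-Introduction: from $\vec E,F^{\wedge}[G(y)],\vec K\circ\!\!-\,H$ infer $\vec E,F^{\wedge}[\sqcup xG(x)],\vec K\circ\!\!-\,H$.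
   Context: Notation: $F^{\vee}[G]$ (resp. $F^{\wedge}[G]$) denotes a formula $F$ with a fixed surface occurrence of $G$ that is not in the scope of any $\wedge$ (resp. any $\vee$); $F^{\vee}[G']$ denotes the result of replacing that occurrence by $G'$, and similarly for $F^{\wedge}$. $G(y)$ is the result of replacing all free occurrences of $x$ in $G(x)$ by $y$. Language. Fix an infinite set of variables and an infinite, disjoint set of constants $\{0,1,10,11,100,\ldots\}$ (binary numerals). There are nonlogical predicate and function letters, each with a fixed arity (infinitely many of each arity), and the binary logical predicate letter $=$. Formulas are built from atomic formulas and their negations, the $0$-ary connectives $\top,\bot$, binary $\wedge,\vee$ (parallel) and $\sqcap,\sqcup$ (choice), blind quantifiers $\forall,\exists$ and choice quantifiers $\sqcap x,\sqcup x$. For nonatomic $E$, $\neg E$ abbreviates its De Morgan dual and $E\to F$ abbreviates $\neg E\vee F$. A sequent is $E_1,\ldots,E_n\circ\!\!-\,F$ ($n\ge0$); free and bound variables of any sequent are assumed disjoint. $\vec E,\vec K,\ldots$ denote finite sequences of formulas. Elementarization: $\|F\|$ replaces every $\sqcup$- and $\sqcup x$-subformula by $\bot$ and every $\sqcap$- and $\sqcap x$-subformula by $\top$; $\|G_1,\ldots,G_n\circ\!\!-\,F\|=\|G_1\|\wedge\cdots\wedge\|G_n\|\to\|F\|$. A sequent is stable iff its elementarization is valid in classical first-order logic with function letters, constants and identity. A surface occurrence is one not in the scope of a choice operator ($\sqcap,\sqcup,\sqcap x,\sqcup x$); $F[E]$ denotes a formula with a fixed surface occurrence of $E$, and $F[H]$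 the result of replacing that occurrence by $H$. The rules of $\mathbf{CL12}$: - $\sqcup$-Choose: from $\vec G\circ\!\!-\,F[H_i]$ infer $\vec G\circ\!\!-\,F[H_0\sqcup H_1]$ ($i\in\{0,1\}$). - $\sqcap$-Choose: from $\vec G,E[H_i],\vec K\circ\!\!-\,F$ infer $\vec G,E[H_0\sqcap H_1],\vec K\circ\!\!-\,F$. - $\sqcup x$-Choose: from $\vec G\circ\!\!-\,F[H(\mathfrak t)]$ infer $\vec G\circ\!\!-\,F[\sqcup xH(x)]$. - $\sqcap x$-Choose: from $\vec G,E[H(\mathfrak t)],\vec K\circ\!\!-\,F$ infer $\vec G,E[\sqcap xH(x)],\vec K\circ\!\!-\,F$. ($\mathfrak t$ a constant or a variable with no bound occurrences in the premise.) - Replicate: from $\vec G,E,\vec K,E\circ\!\!-\,F$ infer $\vec G,E,\vec K\circ\!\!-\,F$. - Wait: from $Y_1,\ldots,Y_n$ ($n\ge0$) infer $X$, provided: (1) whenever $X$ is $\vec G\circ\!\!-\,F[H_0\sqcap H_1]$, both $\vec G\circ\!\!-\,F[H_0]$ and $\vec G\circ\!\!-\,F[H_1]$ are among the $Y_i$; (2) whenever $X$ is $\vec G,E[H_0\sqcup H_1],\vec K\circ\!\!-\,F$, both $\vec G,E[H_0],\vec K\circ\!\!-\,F$ and $\vec G,E[H_1],\vec K\circ\!\!-\,F$ are among the $Y_i$; (3) whenever $X$ is $\vec G\circ\!\!-\,F[\sqcap xH(x)]$, for some variable $y$ not occurring in $X$, $\vec G\circ\!\!-\,F[H(y)]$ is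 among the $Y_i$; (4) whenever $X$ is $\vec G,E[\sqcup xH(x)],\vec K\circ\!\!-\,F$, for some $y$ not occurring in $X$, $\vec G,E[H(y)],\vec K\circ\!\!-\,F$ is among the $Y_i$; (5) $X$ is stable. A $\mathbf{CL12}$-proof of $X$ is a finite sequence of sequents ending in $X$, each following by a rule from earlier members. *)

From Stdlib Require Import List Arith.
Import ListNotations.

(* A function letter is a pair (name, arity); the arity of the letter
   in [App f ts] is [length ts], so f-with-arity-n and f-with-arity-m are
   different letters, and there are infinitely many letters of each arity. *)
Inductive term : Type :=
| Var (v : nat)
| Const (c : nat)
| App (f : nat) (ts : list term).

(* Predicate letters likewise: (name, length of argument list).  [Eq] is the
   logical identity predicate. Negation applies only to atoms. *)
Inductive form : Type :=
| Atom (p : nat) (ts : list term)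
| NAtom (p : nat) (ts : list term)
| Eq (t1 t2 : term)
| NEq (t1 t2 : term)
| Top
| Bot
| And (A B : form)
| Or (A B : form)
| Chand (A B : form)        (* choice conjunction  ⊓ *)
| Chor (A B : form)         (* choice disjunction  ⊔ *)
| Forall (x : nat) (A : form)
| Exists (x : nat) (A : form)
| Chall (x : nat) (A : form)    (* choice ⊓x *)
| Chex (x : nat) (A : form).    (* choice ⊔x *)

(* A sequent  E1,...,En o- F *)
Definition sequent : Type := (list form * form)%type.

Fixpoint term_vars (t : term) : list nat :=
  match t with
  | Var v => [v]
  | Const _ => []
  | App _ ts => flat_map term_vars ts
  end.

Fixpoint vars (F : form) : list nat :=
  match F with
  | Atom _ ts | NAtom _ ts => flat_map term_vars ts
  | Eq t1 t2 | NEq t1 t2 => term_vars t1 ++ term_vars t2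
  | Top | Bot => []
  | And A B | Or A B | Chand A B | Chor A B => vars A ++ vars B
  | Forall x A | Exists x A | Chall x A | Chex x A => x :: vars A
  end.

Fixpoint free_vars (F : form) : list nat :=
  match F with
  | Atom _ ts | NAtom _ ts => flat_map term_vars ts
  | Eq t1 t2 | NEq t1 t2 => term_vars t1 ++ term_vars t2
  | Top | Bot => []
  | And A B | Or A B | Chand A B | Chor A B => free_vars A ++ free_vars B
  | Forall x A | Exists x A | Chall x A | Chex x A =>
      filter (fun v => negb (Nat.eqb v x)) (free_vars A)
  end.

Fixpoint bound_vars (F : form) : list nat :=
  match F with
  | And A B | Or A B | Chand A B | Chor A B => bound_vars A ++ bound_vars B
  | Forall x A | Exists x A | Chall x A | Chex x A => x :: bound_vars A
  | _ => []
  end.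

Definition seq_forms (S : sequent) : list form := snd S :: fst S.

Definition occurs_seq (y : nat) (S : sequent) : Prop :=
  exists F, In F (seq_forms S) /\ In y (vars F).

Definition bound_in_seq (y : nat) (S : sequent) : Prop :=
  exists F, In F (seq_forms S) /\ In y (bound_vars F).

Definition free_in_seq (y : nat) (S : sequent) : Prop :=
  exists F, In F (seq_forms S) /\ In y (free_vars F).

(* standing assumption: free and bound variables of a sequent are disjoint *)
Definition proper_seq (S : sequent) : Prop :=
  forall y, free_in_seq y S -> bound_in_seq y S -> False.

Fixpoint subst_term (x : nat) (s : term) (t : term) : term :=
  match t with
  | Var v => if Nat.eqb v x then s else Var v
  | Const c => Const c
  | App f ts => App f (map (subst_term x s) ts)
  end.

Fixpoint subst (x : nat) (s : term) (F : form) : form :=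
  match F with
  | Atom p ts => Atom p (map (subst_term x s) ts)
  | NAtom p ts => NAtom p (map (subst_term x s) ts)
  | Eq t1 t2 => Eq (subst_term x s t1) (subst_term x s t2)
  | NEq t1 t2 => NEq (subst_term x s t1) (subst_term x s t2)
  | Top => Top
  | Bot => Bot
  | And A B => And (subst x s A) (subst x s B)
  | Or A B => Or (subst x s A) (subst x s B)
  | Chand A B => Chand (subst x s A) (subst x s B)
  | Chor A B => Chor (subst x s A) (subst x s B)
  | Forall z A => if Nat.eqb z x then Forall z A else Forall z (subst x s A)
  | Exists z A => if Nat.eqb z x then Exists z A else Exists z (subst x s A)
  | Chall z A => if Nat.eqb z x then Chall z A else Chall z (subst x s A)
  | Chex z A => if Nat.eqb z x then Chex z A else Chex z (subst x s A)
  end.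

(* A surface occurrence is one not in the scope of a choice operator; since
   negation only applies to atoms, the path to it goes through /\, \/, ∀, ∃. *)
Inductive ctx : Type :=
| Hole
| CAndL (c : ctx) (B : form)
| CAndR (A : form) (c : ctx)
| COrL (c : ctx) (B : form)
| COrR (A : form) (c : ctx)
| CForall (x : nat) (c : ctx)
| CExists (x : nat) (c : ctx).

Fixpoint fill (c : ctx) (H : form) : form :=
  match c with
  | Hole => H
  | CAndL c B => And (fill c H) B
  | CAndR A c => And A (fill c H)
  | COrL c B => Or (fill c H) B
  | COrR A c => Or A (fill c H)
  | CForall x c => Forall x (fill c H)
  | CExists x c => Exists x (fill c H)
  end.

(* the hole is not in the scope of any /\   (contexts for F^∨[ ]) *)
Fixpoint no_and (c : ctx) : Prop :=
  match c with
  | Hole => True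
  | CAndL _ _ | CAndR _ _ => False
  | COrL c _ | COrR _ c | CForall _ c | CExists _ c => no_and c
  end.

(* the hole is not in the scope of any \/   (contexts for F^∧[ ]) *)
Fixpoint no_or (c : ctx) : Prop :=
  match c with
  | Hole => True
  | COrL _ _ | COrR _ _ => False
  | CAndL c _ | CAndR _ c | CForall _ c | CExists _ c => no_or c
  end.

Fixpoint neg (F : form) : form :=
  match F with
  | Atom p ts => NAtom p ts
  | NAtom p ts => Atom p ts
  | Eq t1 t2 => NEq t1 t2
  | NEq t1 t2 => Eq t1 t2
  | Top => Bot
  | Bot => Top
  | And A B => Or (neg A) (neg B)
  | Or A B => And (neg A) (neg B)
  | Chand A B => Chor (neg A) (neg B)
  | Chor A B => Chand (neg A) (neg B)
  | Forall x A => Exists x (neg A)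
  | Exists x A => Forall x (neg A)
  | Chall x A => Chex x (neg A)
  | Chex x A => Chall x (neg A)
  end.

Fixpoint elem (F : form) : form :=
  match F with
  | Chor _ _ | Chex _ _ => Bot
  | Chand _ _ | Chall _ _ => Top
  | And A B => And (elem A) (elem B)
  | Or A B => Or (elem A) (elem B)
  | Forall x A => Forall x (elem A)
  | Exists x A => Exists x (elem A)
  | G => G
  end.

Fixpoint big_and (l : list form) : form :=
  match l with
  | [] => Top
  | [G] => G
  | G :: l' => And G (big_and l')
  end.

Definition elem_seq (S : sequent) : form :=
  Or (neg (big_and (map elem (fst S)))) (elem (snd S)).

Record structure : Type := {
  dom : Type;
  dom_inh : dom;
  c_int : nat -> dom;
  f_int : nat -> list dom -> dom;
  p_int : nat -> list dom -> Prop
}.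

Fixpoint eval (M : structure) (e : nat -> dom M) (t : term) : dom M :=
  match t with
  | Var v => e v
  | Const c => c_int M c
  | App f ts => f_int M f (map (eval M e) ts)
  end.

Definition upd {D : Type} (e : nat -> D) (x : nat) (d : D) : nat -> D :=
  fun v => if Nat.eqb v x then d else e v.

(* Choice operators never occur in elementarizations; they are given
   their classical counterparts here only to make [sat] total. *)
Fixpoint sat (M : structure) (e : nat -> dom M) (F : form) : Prop :=
  match F with
  | Atom p ts => p_int M p (map (eval M e) ts)
  | NAtom p ts => ~ p_int M p (map (eval M e) ts)
  | Eq t1 t2 => eval M e t1 = eval M e t2
  | NEq t1 t2 => eval M e t1 <> eval M e t2
  | Top => True
  | Bot => False
  | And A B | Chand A B => sat M e A /\ sat M e B
  | Or A B | Chor A B => sat M e A \/ sat M e B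
  | Forall x A | Chall x A => forall d, sat M (upd e x d) A
  | Exists x A | Chex x A => exists d, sat M (upd e x d) A
  end.

Definition valid (F : form) : Prop :=
  forall (M : structure) (e : nat -> dom M), sat M e F.

Definition stable (S : sequent) : Prop := valid (elem_seq S).

Definition wait_ok (earlier : list sequent) (X : sequent) : Prop :=
  (forall Gs c H0 H1, X = (Gs, fill c (Chand H0 H1)) ->
      In (Gs, fill c H0) earlier /\ In (Gs, fill c H1) earlier) /\
  (forall Gs c H0 H1 Ks F, X = (Gs ++ fill c (Chor H0 H1) :: Ks, F) ->
      In (Gs ++ fill c H0 :: Ks, F) earlier /\
      In (Gs ++ fill c H1 :: Ks, F) earlier) /\
  (forall Gs c x H, X = (Gs, fill c (Chall x H)) ->
      exists y, ~ occurs_seq y X /\ In (Gs, fill c (subst x (Var y) H)) earlier) /\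
  (forall Gs c x H Ks F, X = (Gs ++ fill c (Chex x H) :: Ks, F) ->
      exists y, ~ occurs_seq y X /\
        In (Gs ++ fill c (subst x (Var y) H) :: Ks, F) earlier) /\
  stable X.

Definition ok_choice_term (t : term) (premise : sequent) : Prop :=
  (exists c, t = Const c) \/ (exists y, t = Var y /\ ~ bound_in_seq y premise).

Definition follows (earlier : list sequent) (X : sequent) : Prop :=
  (exists Gs c H0 H1 (i : bool),
      X = (Gs, fill c (Chor H0 H1)) /\
      In (Gs, fill c (if i then H1 else H0)) earlier) \/
  (exists Gs c H0 H1 Ks F (i : bool),
      X = (Gs ++ fill c (Chand H0 H1) :: Ks, F) /\
      In (Gs ++ fill c (if i then H1 else H0) :: Ks, F) earlier) \/
  (exists Gs c x H t,
      X = (Gs, fill c (Chex x H)) /\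
      ok_choice_term t (Gs, fill c (subst x t H)) /\
      In (Gs, fill c (subst x t H)) earlier) \/
  (exists Gs c x H Ks F t,
      X = (Gs ++ fill c (Chall x H) :: Ks, F) /\
      ok_choice_term t (Gs ++ fill c (subst x t H) :: Ks, F) /\
      In (Gs ++ fill c (subst x t H) :: Ks, F) earlier) \/
  (exists Gs E Ks F,
      X = (Gs ++ E :: Ks, F) /\
      In (Gs ++ E :: Ks ++ [E], F) earlier) \/
  wait_ok earlier X.

(* A CL12-proof: a finite sequence of sequents, each following by a rule
   from earlier members.  All members are sequents, hence proper. *)
Definition is_proof (l : list sequent) : Prop :=
  forall i, i < length l ->
    proper_seq (nth i l ([], Top)) /\
    follows (firstn i l) (nth i l ([], Top)).

Definition provable (X : sequent) : Prop :=
  exists l, is_proof l /\ l <> [] /\ last l ([], Top) = X.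

(* The four rules are treated uniformly: a position [L] in a sequent carries a choice formula
   that Wait would decompose there (⊓, ⊓x in the succedent, ⊔, ⊔x in the antecedent).

   Two facts about CL12 drive the proof.  First, Wait is invertible without increasing proof
   height: if a sequent is derivable, so is every premise Wait would demand of one of its
   ⊓/⊓x-succedent or ⊔/⊔x-antecedent occurrences, because no other rule acts on such an
   occurrence and it can be carried along through every step (eigenvariables are renamed
   where needed, which also preserves height).  Second, the conclusion of an introduction is
   stable: the introduced formula elementarizes to ⊤ in the scope of disjunctions only in the
   succedent (⊥ in the scope of conjunctions only in the antecedent).

   The conclusion is then obtained by a single Wait step, by induction on the number of choice
   operators: the premises for the introduced occurrence are given, and those for any other
   occurrence come from inverting the given premises and applying the induction hypothesis
   to the resulting introduction instance, which has one choice operator fewer. *)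

From Stdlib Require Import List Arith Lia Classical.
Import ListNotations.

Ltac case_eqb :=
  match goal with |- context [Nat.eqb ?a ?b] => destruct (Nat.eqb_spec a b) end.

Fixpoint term_nested_ind (P : term -> Prop) (Hv : forall v, P (Var v))
  (Hc : forall c, P (Const c)) (Ha : forall f ts, List.Forall P ts -> P (App f ts))
  (t : term) : P t :=
  match t with
  | Var v => Hv v
  | Const c => Hc c
  | App f ts => Ha f ts ((fix go (l : list term) : List.Forall P l :=
       match l with
       | [] => Forall_nil _
       | u :: l' => Forall_cons _ (term_nested_ind P Hv Hc Ha u) (go l')
       end) ts)
  end.

Lemma subst_term_fresh y s t : ~ In y (term_vars t) -> subst_term y s t = t.
Proof.
  induction t using term_nested_ind; simpl; intros Hn.
  - case_eqb; subst; tauto.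
  - reflexivity.
  - f_equal. induction H; simpl in *; auto.
    rewrite in_app_iff in Hn. f_equal; auto.
Qed.

Lemma in_term_vars_subst x s t v : In v (term_vars (subst_term x s t)) ->
  (In v (term_vars t) /\ v <> x) \/ In v (term_vars s).
Proof.
  revert v; induction t using term_nested_ind; simpl; intros w Hn.
  - destruct (Nat.eqb_spec v x); subst; auto.
    simpl in Hn; destruct Hn as [<-|[]]; auto.
  - destruct Hn.
  - induction H; simpl in *; [destruct Hn|].
    rewrite in_app_iff in *. destruct Hn as [Hn|Hn].
    + destruct (H _ Hn) as [[]|]; auto.
    + destruct (IHForall Hn) as [[]|]; auto.
Qed.

Lemma subst_term_comm x y s t u : x <> y -> ~ In x (term_vars s) ->
  subst_term y s (subst_term x t u) =
  subst_term x (subst_term y s t) (subst_term y s u).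
Proof.
  intros Hxy Hs; induction u using term_nested_ind; simpl.
  - destruct (Nat.eqb_spec v x); subst; simpl.
    + case_eqb; [congruence|]. simpl. now rewrite Nat.eqb_refl.
    + destruct (Nat.eqb_spec v y); subst.
      * now rewrite subst_term_fresh.
      * simpl. case_eqb; congruence.
  - reflexivity.
  - f_equal. rewrite !map_map. induction H; simpl; f_equal; auto.
Qed.

Lemma subst_term_var_comp x y z u : ~ In y (term_vars u) ->
  subst_term y (Var z) (subst_term x (Var y) u) = subst_term x (Var z) u.
Proof.
  induction u using term_nested_ind; simpl; intros Hn.
  - destruct (Nat.eqb_spec v x); simpl.
    + now rewrite Nat.eqb_refl.
    + case_eqb; subst; tauto.
  - reflexivity.
  - f_equal. rewrite map_map. induction H; simpl in *; auto.
    rewrite in_app_iff in Hn. f_equal; auto.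
Qed.

Lemma map_subst_term_fresh y s ts : ~ In y (flat_map term_vars ts) ->
  map (subst_term y s) ts = ts.
Proof.
  induction ts; simpl; rewrite ?in_app_iff; intros H; auto.
  rewrite subst_term_fresh by tauto. f_equal. apply IHts. tauto.
Qed.

Lemma in_flat_map_subst x t ts v :
  In v (flat_map term_vars (map (subst_term x t) ts)) ->
  (In v (flat_map term_vars ts) /\ v <> x) \/ In v (term_vars t).
Proof.
  induction ts; simpl; rewrite ?in_app_iff; intros H; auto.
  destruct H as [H|H].
  - destruct (in_term_vars_subst _ _ _ _ H) as [[]|]; auto.
  - destruct (IHts H) as [[]|]; auto.
Qed.

Fixpoint choice_count (F : form) : nat :=
  match F with
  | And A B | Or A B => choice_count A + choice_count B
  | Chand A B | Chor A B => S (choice_count A + choice_count B)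
  | Forall _ A | Exists _ A => choice_count A
  | Chall _ A | Chex _ A => S (choice_count A)
  | _ => 0
  end.

Lemma choice_count_subst x t F : choice_count (subst x t F) = choice_count F.
Proof. induction F; simpl; auto; case_eqb; simpl; auto. Qed.

Lemma subst_fresh y s F : ~ In y (vars F) -> subst y s F = F.
Proof.
  induction F; simpl; intros H; rewrite ?in_app_iff in H;
    try (f_equal; solve [auto | apply map_subst_term_fresh; auto
                         | apply subst_term_fresh; tauto]).
  all: case_eqb; [reflexivity | f_equal; apply IHF; tauto].
Qed.

Lemma bound_vars_subst x t F : bound_vars (subst x t F) = bound_vars F.
Proof.
  induction F; simpl; auto; try congruence.
  all: case_eqb; simpl; congruence.
Qed.

Lemma in_free_vars_subst x t F v : In v (free_vars (subst x t F)) ->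
  (In v (free_vars F) /\ v <> x) \/ In v (term_vars t).
Proof.
  revert v; induction F; simpl; intros v H; auto; try (apply in_flat_map_subst; auto);
    rewrite ?in_app_iff in *.
  1-2: destruct H as [H|H]; destruct (in_term_vars_subst _ _ _ _ H) as [[]|]; auto.
  1-4: destruct H as [H|H]; [destruct (IHF1 _ H) as [[]|] | destruct (IHF2 _ H) as [[]|]];
       auto.
  all: revert H; case_eqb; subst; simpl; rewrite !filter_In; intros [H1 H2];
    [ left; split; [auto|]; intros ->; rewrite Nat.eqb_refl in H2; discriminate
    | destruct (IHF _ H1) as [[]|]; auto ].
Qed.

Lemma in_vars_subst x t F v : In v (vars (subst x t F)) ->
  In v (vars F) \/ In v (term_vars t).
Proof.
  revert v; induction F; simpl; intros v H; auto;
    try (destruct (in_flat_map_subst _ _ _ _ H) as [[]|]; auto); rewrite ?in_app_iff in *.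
  1-2: destruct H as [H|H]; destruct (in_term_vars_subst _ _ _ _ H) as [[]|]; auto.
  1-4: destruct H as [H|H]; [destruct (IHF1 _ H) | destruct (IHF2 _ H)]; auto.
  all: revert H; case_eqb; subst; simpl; intros [H|H]; auto; destruct (IHF _ H); auto.
Qed.

Lemma subst_comm x y s t F : x <> y -> ~ In x (term_vars s) ->
  ~ In y (bound_vars F) ->
  subst y s (subst x t F) = subst x (subst_term y s t) (subst y s F).
Proof.
  intros Hxy Hs; induction F; simpl; intros Hb; rewrite ?in_app_iff in Hb;
    try (f_equal; solve [ rewrite !map_map; apply map_ext; intros; apply subst_term_comm; auto
                        | apply subst_term_comm; auto | auto ]).
  all: destruct (Nat.eqb_spec x0 x); destruct (Nat.eqb_spec x0 y); subst; try tauto; simpl;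
       repeat (case_eqb; try congruence); f_equal; auto.
Qed.

Lemma subst_var_comp x y z F : ~ In y (vars F) ->
  subst y (Var z) (subst x (Var y) F) = subst x (Var z) F.
Proof.
  induction F; simpl; intros H; rewrite ?in_app_iff in H;
    try (f_equal; solve [ rewrite map_map; apply map_ext_in; intros u Hu;
                          apply subst_term_var_comp; intro; apply H, in_flat_map; eauto
                        | apply subst_term_var_comp; tauto | auto ]).
  all: destruct (Nat.eqb_spec x0 x); subst; simpl;
       (destruct (Nat.eqb_spec x y); [subst; tauto|]) ||
       (destruct (Nat.eqb_spec x0 y); [subst; tauto|]);
       f_equal; try apply subst_fresh; auto.
Qed.

Lemma eval_ext M e e' t : (forall v, e v = e' v) -> eval M e t = eval M e' t.
Proof.
  intros He; induction t using term_nested_ind; simpl; auto.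
  f_equal. induction H; simpl; f_equal; auto.
Qed.

Lemma eval_subst_var M e y z t :
  eval M e (subst_term y (Var z) t) = eval M (upd e y (e z)) t.
Proof.
  induction t using term_nested_ind; simpl.
  - unfold upd. now case_eqb.
  - reflexivity.
  - f_equal. rewrite map_map. induction H; simpl; f_equal; auto.
Qed.

Lemma sat_ext M F : forall e e', (forall v, e v = e' v) -> (sat M e F <-> sat M e' F).
Proof.
  induction F; intros e e' He; simpl;
    try (rewrite (map_ext (eval M e) (eval M e')) by (intros; apply eval_ext; auto); tauto);
    try (rewrite (eval_ext M e e' t1), (eval_ext M e e' t2) by auto; tauto);
    try (rewrite (IHF1 e e'), (IHF2 e e') by auto; tauto); try tauto.
  all: assert (Hq : forall d, sat M (upd e x d) F <-> sat M (upd e' x d) F)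
         by (intros d; apply IHF; intros v; unfold upd; case_eqb; auto).
  all: firstorder.
Qed.

Lemma sat_subst_var M F : forall e y z, ~ In z (bound_vars F) ->
  (sat M e (subst y (Var z) F) <-> sat M (upd e y (e z)) F).
Proof.
  induction F; intros e y z Hz; simpl in *; rewrite ?in_app_iff in Hz;
    try (rewrite map_map, (map_ext _ (eval M (upd e y (e z)))) by apply eval_subst_var; tauto);
    try (rewrite !eval_subst_var; tauto);
    try (rewrite IHF1, IHF2 by tauto; tauto); try tauto.
  all: assert (Hq : forall d, sat M (upd e x d) (if x =? y then F else subst y (Var z) F) <->
                              sat M (upd (upd e y (e z)) x d) F);
       [ intros d; case_eqb;
         [ subst; apply sat_ext; intros v; unfold upd; case_eqb; auto
         | rewrite IHF by tauto; apply sat_ext; intros v; unfold upd;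
           repeat case_eqb; subst; tauto ]
       | destruct (x =? y); simpl; firstorder ].
Qed.

Lemma sat_neg M F : forall e, sat M e (neg F) <-> ~ sat M e F.
Proof.
  induction F; intros e; simpl; try (split; [tauto | apply NNPP]); try tauto.
  all: try (rewrite IHF1, IHF2; split; [tauto | apply not_and_or]).
  all: try (rewrite IHF1, IHF2; tauto).
  all: try (split; [ intros [d H] H'; exact (proj1 (IHF _) H (H' d))
                   | intros H; apply not_all_ex_not in H as [d H]; exists d; apply IHF, H ]).
  all: split; [ intros H [d H']; exact (proj1 (IHF _) (H d) H')
              | intros H d; apply IHF; intros H'; apply H; exists d; exact H' ].
Qed.

Lemma elem_subst y s F : elem (subst y s F) = subst y s (elem F).
Proof. induction F; simpl; auto; try congruence; case_eqb; simpl; congruence. Qed.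

Lemma neg_subst y s F : neg (subst y s F) = subst y s (neg F).
Proof. induction F; simpl; auto; try congruence; case_eqb; simpl; congruence. Qed.

Lemma big_and_subst y s l : big_and (map (subst y s) l) = subst y s (big_and l).
Proof.
  induction l as [|a [|b l] IH]; simpl in *; auto. now rewrite IH.
Qed.

Lemma in_bound_vars_elem F v : In v (bound_vars (elem F)) -> In v (bound_vars F).
Proof. induction F; simpl; intros H; auto; rewrite ?in_app_iff in *; firstorder. Qed.

Lemma bound_vars_neg F : bound_vars (neg F) = bound_vars F.
Proof. induction F; simpl; congruence. Qed.

Lemma in_bound_vars_big_and l v : In v (bound_vars (big_and l)) ->
  exists F, In F l /\ In v (bound_vars F).
Proof.
  induction l as [|a [|b l] IH]; simpl; intros H; [destruct H | eauto |].
  rewrite in_app_iff in H. destruct H as [H|H]; [eauto|].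
  destruct (IH H) as [F [HF Hv]]; eauto.
Qed.

Lemma sat_big_and M e l F : sat M e (big_and l) -> In F l -> sat M e F.
Proof.
  induction l as [|a [|b l] IH]; simpl; intros H HF; [destruct HF | intuition congruence |].
  destruct H, HF as [<-|HF]; auto.
Qed.

(** * Two surface occurrences of choice operators *)

Definition is_choice (G : form) : Prop :=
  match G with Chand _ _ | Chor _ _ | Chall _ _ | Chex _ _ => True | _ => False end.

Definition same_scope (c c' : ctx) : Prop :=
  (no_and c <-> no_and c') /\ (no_or c <-> no_or c').

Fixpoint ctx_comp (p c : ctx) : ctx :=
  match p with
  | Hole => c
  | CAndL p' B => CAndL (ctx_comp p' c) B
  | CAndR A p' => CAndR A (ctx_comp p' c)
  | COrL p' B => COrL (ctx_comp p' c) B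
  | COrR A p' => COrR A (ctx_comp p' c)
  | CForall x p' => CForall x (ctx_comp p' c)
  | CExists x p' => CExists x (ctx_comp p' c)
  end.

Lemma fill_ctx_comp p c G : fill (ctx_comp p c) G = fill p (fill c G).
Proof. induction p; simpl; f_equal; auto. Qed.

Lemma same_scope_comp p c c' : same_scope c c' -> same_scope (ctx_comp p c) (ctx_comp p c').
Proof. induction p; simpl; auto; unfold same_scope in *; simpl; tauto. Qed.

(* [ctx_apart c1 G2 c2 G1]: the occurrences of [G1] at [c1] and of [G2] at [c2] in the same
   formula are disjoint.  [K Z W] is that formula with [G1] replaced by [Z] and [G2] by [W];
   [d1 W] is the context of the first occurrence once the second holds [W], and symmetrically. *)
Definition ctx_apart (c1 : ctx) (G2 : form) (c2 : ctx) (G1 : form) : Prop :=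
  exists (K : form -> form -> form) (d1 d2 : form -> ctx),
    (forall Z W, fill (d1 W) Z = K Z W) /\ (forall Z W, fill (d2 Z) W = K Z W) /\
    d1 G2 = c1 /\ d2 G1 = c2 /\
    (forall W, same_scope c1 (d1 W)) /\ (forall Z, same_scope c2 (d2 Z)).

Lemma ctx_apart_comp p c1 G2 c2 G1 :
  ctx_apart c1 G2 c2 G1 -> ctx_apart (ctx_comp p c1) G2 (ctx_comp p c2) G1.
Proof.
  intros [K [d1 [d2 [H1 [H2 [<- [<- [H5 H6]]]]]]]].
  exists (fun Z W => fill p (K Z W)), (fun W => ctx_comp p (d1 W)),
    (fun Z => ctx_comp p (d2 Z)).
  split; [|split; [|split; [|split; [|split]]]]; intros; rewrite ?fill_ctx_comp, ?H1, ?H2;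
    auto; apply same_scope_comp; auto.
Qed.

Lemma fill_eq_cases c1 G1 c2 G2 : fill c1 G1 = fill c2 G2 -> is_choice G1 -> is_choice G2 ->
  (c1 = c2 /\ G1 = G2) \/ ctx_apart c1 G2 c2 G1.
Proof.
  revert G1 c2 G2; induction c1; intros G1 c2 G2 Heq Hc1 Hc2; destruct c2; simpl in Heq;
    try discriminate; try (subst; simpl in *; tauto); injection Heq; intros; subst;
    try (destruct (IHc1 _ _ _ ltac:(eassumption) Hc1 Hc2) as [[-> ->]|Hi]; [now left|right]).
  - exact (ctx_apart_comp (CAndL Hole B0) _ _ _ _ Hi).
  - right; exists (fun Z W => And (fill c1 Z) (fill c2 W)), (fun W => CAndL c1 (fill c2 W)),
      (fun Z => CAndR (fill c1 Z) c2); repeat split; simpl; tauto.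
  - right; exists (fun Z W => And (fill c2 W) (fill c1 Z)), (fun W => CAndR (fill c2 W) c1),
      (fun Z => CAndL c2 (fill c1 Z)); repeat split; simpl; tauto.
  - exact (ctx_apart_comp (CAndR A0 Hole) _ _ _ _ Hi).
  - exact (ctx_apart_comp (COrL Hole B0) _ _ _ _ Hi).
  - right; exists (fun Z W => Or (fill c1 Z) (fill c2 W)), (fun W => COrL c1 (fill c2 W)),
      (fun Z => COrR (fill c1 Z) c2); repeat split; simpl; tauto.
  - right; exists (fun Z W => Or (fill c2 W) (fill c1 Z)), (fun W => COrR (fill c2 W) c1),
      (fun Z => COrL c2 (fill c1 Z)); repeat split; simpl; tauto.
  - exact (ctx_apart_comp (COrR A0 Hole) _ _ _ _ Hi).
  - exact (ctx_apart_comp (CForall x0 Hole) _ _ _ _ Hi).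
  - exact (ctx_apart_comp (CExists x0 Hole) _ _ _ _ Hi).
Qed.

(* A surface position in a sequent: in the succedent, or in the antecedent formula
   between [Gs] and [Ks]. *)
Inductive pos : Type :=
| PSucc (Gs : list form) (c : ctx)
| PAnte (Gs Ks : list form) (F : form) (c : ctx).

Definition plug (L : pos) (G : form) : sequent :=
  match L with
  | PSucc Gs c => (Gs, fill c G)
  | PAnte Gs Ks F c => (Gs ++ fill c G :: Ks, F)
  end.

Definition pos_ctx (L : pos) : ctx := match L with PSucc _ c | PAnte _ _ _ c => c end.

Definition in_succ (L : pos) : bool := match L with PSucc _ _ => true | PAnte _ _ _ _ => false end.

(* The positions at which the introduction rules act: [F^∨[ ]] in the succedent,
   [F^∧[ ]] in the antecedent. *)
Definition intro_pos (L : pos) : Prop :=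
  match L with PSucc _ c => no_and c | PAnte _ _ _ c => no_or c end.

Definition same_kind (L L' : pos) : Prop :=
  in_succ L = in_succ L' /\ (intro_pos L <-> intro_pos L').

(* The analogue of [ctx_apart] for sequents. *)
Definition apart (L1 : pos) (G2 : form) (L2 : pos) (G1 : form) : Prop :=
  exists (Q : form -> form -> sequent) (M1 M2 : form -> pos),
    (forall Z W, plug (M1 W) Z = Q Z W) /\ (forall Z W, plug (M2 Z) W = Q Z W) /\
    M1 G2 = L1 /\ M2 G1 = L2 /\
    (forall W, same_kind L1 (M1 W)) /\ (forall Z, same_kind L2 (M2 Z)).

Lemma app_cons_eq_cases {A : Type} (l1 l2 k1 k2 : list A) a b : l1 ++ a :: k1 = l2 ++ b :: k2 ->
  (l1 = l2 /\ a = b /\ k1 = k2) \/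
  (exists m, l2 = l1 ++ a :: m /\ k1 = m ++ b :: k2) \/
  (exists m, l1 = l2 ++ b :: m /\ k2 = m ++ a :: k1).
Proof.
  revert l2; induction l1 as [|x l1 IH]; intros l2 H; destruct l2 as [|y l2]; simpl in H;
    injection H; intros; subst.
  - left; auto.
  - right; left; exists l2; auto.
  - right; right; exists l1; auto.
  - destruct (IH _ ltac:(eassumption)) as [[? []]|[[m []]|[m []]]]; subst.
    + left; auto.
    + right; left; exists m; auto.
    + right; right; exists m; auto.
Qed.

Lemma apart_of_ctx_apart_succ Gs c1 G2 c2 G1 :
  ctx_apart c1 G2 c2 G1 -> apart (PSucc Gs c1) G2 (PSucc Gs c2) G1.
Proof.
  intros [K [d1 [d2 [H1 [H2 [<- [<- [H5 H6]]]]]]]].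
  exists (fun Z W => (Gs, K Z W)), (fun W => PSucc Gs (d1 W)), (fun Z => PSucc Gs (d2 Z)).
  simpl; split; [|split; [|split; [|split; [|split]]]]; intros; rewrite ?H1, ?H2; auto;
    split; auto; apply H5 || apply H6.
Qed.

Lemma apart_of_ctx_apart_ante Gs Ks F c1 G2 c2 G1 :
  ctx_apart c1 G2 c2 G1 -> apart (PAnte Gs Ks F c1) G2 (PAnte Gs Ks F c2) G1.
Proof.
  intros [K [d1 [d2 [H1 [H2 [<- [<- [H5 H6]]]]]]]].
  exists (fun Z W => (Gs ++ K Z W :: Ks, F)), (fun W => PAnte Gs Ks F (d1 W)),
    (fun Z => PAnte Gs Ks F (d2 Z)).
  simpl; split; [|split; [|split; [|split; [|split]]]]; intros; rewrite ?H1, ?H2; auto;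
    split; auto; apply H5 || apply H6.
Qed.

Lemma plug_eq_cases L1 G1 L2 G2 : plug L1 G1 = plug L2 G2 -> is_choice G1 -> is_choice G2 ->
  (L1 = L2 /\ G1 = G2) \/ apart L1 G2 L2 G1.
Proof.
  intros Heq Hc1 Hc2; destruct L1 as [Gs1 c1|Gs1 Ks1 F1 c1];
    destruct L2 as [Gs2 c2|Gs2 Ks2 F2 c2]; simpl in Heq; injection Heq; intros; subst.
  - destruct (fill_eq_cases _ _ _ _ H Hc1 Hc2) as [[-> ->]|Hi]; [now left|right].
    now apply apart_of_ctx_apart_succ.
  - right. exists (fun Z W => (Gs2 ++ fill c2 W :: Ks2, fill c1 Z)),
      (fun W => PSucc (Gs2 ++ fill c2 W :: Ks2) c1), (fun Z => PAnte Gs2 Ks2 (fill c1 Z) c2).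
    simpl; repeat split; auto.
  - right. exists (fun Z W => (Gs1 ++ fill c1 Z :: Ks1, fill c2 W)),
      (fun W => PAnte Gs1 Ks1 (fill c2 W) c1), (fun Z => PSucc (Gs1 ++ fill c1 Z :: Ks1) c2).
    simpl; repeat split; auto.
  - destruct (app_cons_eq_cases _ _ _ _ _ _ H0) as [[? []]|[[m []]|[m []]]]; subst.
    + destruct (fill_eq_cases _ _ _ _ H1 Hc1 Hc2) as [[-> ->]|Hi]; [now left|right].
      now apply apart_of_ctx_apart_ante.
    + right. exists (fun Z W => (Gs1 ++ fill c1 Z :: m ++ fill c2 W :: Ks2, F2)),
        (fun W => PAnte Gs1 (m ++ fill c2 W :: Ks2) F2 c1),
        (fun Z => PAnte (Gs1 ++ fill c1 Z :: m) Ks2 F2 c2).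
      simpl; repeat split; intros; auto. now rewrite <- app_assoc.
    + right. exists (fun Z W => (Gs2 ++ fill c2 W :: m ++ fill c1 Z :: Ks1, F2)),
        (fun W => PAnte (Gs2 ++ fill c2 W :: m) Ks1 F2 c1),
        (fun Z => PAnte Gs2 (m ++ fill c1 Z :: Ks1) F2 c2).
      simpl; repeat split; intros; auto. now rewrite <- app_assoc.
Qed.

Lemma free_vars_fill_mono (P : nat -> Prop) A B :
  (forall v, In v (free_vars B) -> In v (free_vars A) \/ P v) ->
  forall c v, In v (free_vars (fill c B)) -> In v (free_vars (fill c A)) \/ P v.
Proof.
  intros HAB c; induction c; simpl; intros v H; auto; rewrite ?in_app_iff, ?filter_In in *;
    try (destruct H as [H|H]; first [destruct (IHc _ H); tauto | tauto]).
  all: destruct H as [H1 H2]; destruct (IHc _ H1); auto.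
Qed.

Lemma bound_vars_fill_mono A B :
  (forall v, In v (bound_vars B) -> In v (bound_vars A)) ->
  forall c v, In v (bound_vars (fill c B)) -> In v (bound_vars (fill c A)).
Proof.
  intros HAB c; induction c; simpl; intros v H; auto; rewrite ?in_app_iff in *; firstorder.
Qed.

Lemma vars_fill_mono (P : nat -> Prop) A B :
  (forall v, In v (vars B) -> In v (vars A) \/ P v) ->
  forall c v, In v (vars (fill c B)) -> In v (vars (fill c A)) \/ P v.
Proof.
  intros HAB c; induction c; simpl; intros v H; auto; rewrite ?in_app_iff in *;
    try (destruct H as [H|H]; first [destruct (IHc _ H); tauto | tauto]).
  all: destruct H as [H|H]; auto; destruct (IHc _ H); auto.
Qed.

Lemma plug_vars_mono (f : form -> list nat) (P : nat -> Prop) A B :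
  (forall c v, In v (f (fill c B)) -> In v (f (fill c A)) \/ P v) ->
  forall L v, (exists F, In F (seq_forms (plug L B)) /\ In v (f F)) ->
    (exists F, In F (seq_forms (plug L A)) /\ In v (f F)) \/ P v.
Proof.
  intros Hf L v [F [HF Hv]]; destruct L as [Gs c|Gs Ks F0 c]; simpl in *.
  - destruct HF as [<-|HF]; [destruct (Hf _ _ Hv)|]; eauto.
  - destruct HF as [<-|HF]; eauto.
    rewrite in_app_iff in HF; destruct HF as [HF|[<-|HF]];
      try (left; exists F; rewrite in_app_iff; simpl; auto; fail).
    destruct (Hf _ _ Hv); auto. left; exists (fill c A); rewrite in_app_iff; simpl; auto.
Qed.

Lemma free_in_plug_mono (P : nat -> Prop) A B :
  (forall v, In v (free_vars B) -> In v (free_vars A) \/ P v) ->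
  forall L v, free_in_seq v (plug L B) -> free_in_seq v (plug L A) \/ P v.
Proof. intros; apply (plug_vars_mono free_vars P A B); auto. now apply free_vars_fill_mono. Qed.

Lemma bound_in_plug_mono A B :
  (forall v, In v (bound_vars B) -> In v (bound_vars A)) ->
  forall L v, bound_in_seq v (plug L B) -> bound_in_seq v (plug L A).
Proof.
  intros HAB L v Hb.
  destruct (plug_vars_mono bound_vars (fun _ => False) A B) with (L := L) (v := v) as [|[]];
    auto.
  intros; left; eapply bound_vars_fill_mono; eauto.
Qed.

Lemma occurs_plug_mono (P : nat -> Prop) A B :
  (forall v, In v (vars B) -> In v (vars A) \/ P v) ->
  forall L v, occurs_seq v (plug L B) -> occurs_seq v (plug L A) \/ P v.
Proof. intros; apply (plug_vars_mono vars P A B); auto. now apply vars_fill_mono. Qed.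

Lemma in_bound_vars_fill c G v : In v (bound_vars G) -> In v (bound_vars (fill c G)).
Proof. induction c; simpl; rewrite ?in_app_iff; auto. Qed.

Lemma in_vars_fill c G v : In v (vars G) -> In v (vars (fill c G)).
Proof. induction c; simpl; rewrite ?in_app_iff; auto. Qed.

Lemma in_plug_seq_forms L G : In (fill (pos_ctx L) G) (seq_forms (plug L G)).
Proof. destruct L; simpl; rewrite ?in_app_iff; simpl; auto. Qed.

Lemma bound_in_plug L G v : In v (bound_vars G) -> bound_in_seq v (plug L G).
Proof. intros; eexists; split; [apply in_plug_seq_forms | now apply in_bound_vars_fill]. Qed.

Lemma occurs_plug L G v : In v (vars G) -> occurs_seq v (plug L G).
Proof. intros; eexists; split; [apply in_plug_seq_forms | now apply in_vars_fill]. Qed.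

Lemma in_vars_of_bound F v : In v (bound_vars F) -> In v (vars F).
Proof. induction F; simpl; intros; rewrite ?in_app_iff in *; firstorder. Qed.

Lemma occurs_of_bound X v : bound_in_seq v X -> occurs_seq v X.
Proof. intros [F [HF Hv]]; exists F; auto using in_vars_of_bound. Qed.

Lemma fresh_var X (avoid : list nat) : exists y, ~ occurs_seq y X /\ ~ In y avoid.
Proof.
  set (l := avoid ++ flat_map vars (seq_forms X)).
  assert (Hmax : forall v, In v l -> v <= list_max l)
    by (apply Forall_forall, list_max_le; lia).
  exists (S (list_max l)); split.
  - intros [F [HF Hv]]. enough (S (list_max l) <= list_max l) by lia.
    apply Hmax, in_app_iff; right; apply in_flat_map; eauto.
  - intros Hv. enough (S (list_max l) <= list_max l) by lia. apply Hmax, in_app_iff; auto.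
Qed.

Definition vars_within (A B : form) (z : nat) : Prop :=
  (forall v, In v (free_vars B) -> In v (free_vars A) \/ v = z) /\
  (forall v, In v (bound_vars B) -> In v (bound_vars A)) /\
  (forall v, In v (vars B) -> In v (vars A) \/ v = z).

Lemma proper_plug_vars_within L A B z : proper_seq (plug L A) -> vars_within A B z ->
  ~ bound_in_seq z (plug L A) -> proper_seq (plug L B).
Proof.
  intros Hp [Hfree [Hbound _]] Hz y Hf Hb.
  apply (bound_in_plug_mono A B Hbound) in Hb.
  destruct (free_in_plug_mono _ A B Hfree L y Hf) as [Hf'|<-]; [exact (Hp y Hf' Hb) | auto].
Qed.

(* Wait decomposes [wait_bin] and [wait_quant] (⊓ and ⊓x in the succedent, ⊔ and ⊔x in the
   antecedent); the Choose rules resolve [choose_bin] and [choose_quant]. *)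
Definition wait_bin (L : pos) (A B : form) : form :=
  match L with PSucc _ _ => Chand A B | PAnte _ _ _ _ => Chor A B end.
Definition wait_quant (L : pos) (x : nat) (H : form) : form :=
  match L with PSucc _ _ => Chall x H | PAnte _ _ _ _ => Chex x H end.
Definition choose_bin (L : pos) (A B : form) : form :=
  match L with PSucc _ _ => Chor A B | PAnte _ _ _ _ => Chand A B end.
Definition choose_quant (L : pos) (x : nat) (H : form) : form :=
  match L with PSucc _ _ => Chex x H | PAnte _ _ _ _ => Chall x H end.

Definition choose_step (L : pos) (G G' : form) (P : sequent) : Prop :=
  (exists A B (i : bool), G = choose_bin L A B /\ G' = (if i then B else A)) \/
  (exists x H t, G = choose_quant L x H /\ G' = subst x t H /\ ok_choice_term t P).

Definition wait_from (Pr : sequent -> Prop) (X : sequent) : Prop :=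
  (forall L A B, X = plug L (wait_bin L A B) -> Pr (plug L A) /\ Pr (plug L B)) /\
  (forall L x H, X = plug L (wait_quant L x H) ->
     exists y, ~ occurs_seq y X /\ Pr (plug L (subst x (Var y) H))) /\
  stable X.

Definition follows_from (Pr : sequent -> Prop) (X : sequent) : Prop :=
  (exists L G G', X = plug L G /\ choose_step L G G' (plug L G') /\ Pr (plug L G')) \/
  (exists Gs E Ks F, X = (Gs ++ E :: Ks, F) /\ Pr (Gs ++ E :: Ks ++ [E], F)) \/
  wait_from Pr X.

Lemma follows_from_mono (P Q : sequent -> Prop) X : (forall Y, P Y -> Q Y) ->
  follows_from P X -> follows_from Q X.
Proof.
  intros HPQ [[L [G [G' [H1 [H2 H3]]]]]|[[Gs [E [Ks [F [H1 H2]]]]]|[W1 [W2 W3]]]].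
  - left; exists L, G, G'; auto.
  - right; left; exists Gs, E, Ks, F; auto.
  - right; right; split; [|split]; auto.
    + intros L A B HX; destruct (W1 _ _ _ HX); auto.
    + intros L x H HX; destruct (W2 _ _ _ HX) as [y []]; exists y; auto.
Qed.

Lemma follows_iff_follows_from l X : follows l X <-> follows_from (fun Y => In Y l) X.
Proof.
  split.
  - intros [[Gs [c [H0 [H1 [i [-> HI]]]]]]|[[Gs [c [H0 [H1 [Ks [F [i [-> HI]]]]]]]]|
           [[Gs [c [x [H [t [-> [Ht HI]]]]]]]|[[Gs [c [x [H [Ks [F [t [-> [Ht HI]]]]]]]]]|
           [[Gs [E [Ks [F [-> HI]]]]]|[W1 [W2 [W3 [W4 W5]]]]]]]]].
    + left; exists (PSucc Gs c), (Chor H0 H1), (if i then H1 else H0).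
      repeat split; auto. left; exists H0, H1, i; auto.
    + left; exists (PAnte Gs Ks F c), (Chand H0 H1), (if i then H1 else H0).
      repeat split; auto. left; exists H0, H1, i; auto.
    + left; exists (PSucc Gs c), (Chex x H), (subst x t H).
      repeat split; auto. right; exists x, H, t; auto.
    + left; exists (PAnte Gs Ks F c), (Chall x H), (subst x t H).
      repeat split; auto. right; exists x, H, t; auto.
    + right; left; exists Gs, E, Ks, F; auto.
    + right; right; split; [|split]; auto.
      * intros [Gs c|Gs Ks F c] A B HX; simpl in HX;
          [apply (W1 Gs c) | apply (W2 Gs c A B Ks F)]; auto.
      * intros [Gs c|Gs Ks F c] x H HX; simpl in HX;
          [apply (W3 Gs c) | apply (W4 Gs c x H Ks F)]; auto.
  - intros [[L [G [G' [-> [Hc HI]]]]]|[[Gs [E [Ks [F [-> HI]]]]]|[W1 [W2 W3]]]].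
    + destruct Hc as [[A [B [i [-> ->]]]]|[x [H [t [-> [-> Ht]]]]]];
        destruct L as [Gs c|Gs Ks F c].
      * left; exists Gs, c, A, B, i; auto.
      * right; left; exists Gs, c, A, B, Ks, F, i; auto.
      * right; right; left; exists Gs, c, x, H, t; auto.
      * right; right; right; left; exists Gs, c, x, H, Ks, F, t; auto.
    + right; right; right; right; left; exists Gs, E, Ks, F; auto.
    + right; right; right; right; right.
      split; [|split; [|split; [|split]]]; auto.
      * intros Gs c H0 H1 HX; apply (W1 (PSucc Gs c)); auto.
      * intros Gs c H0 H1 Ks F HX; apply (W1 (PAnte Gs Ks F c)); auto.
      * intros Gs c x H HX; apply (W2 (PSucc Gs c)); auto.
      * intros Gs c x H Ks F HX; apply (W2 (PAnte Gs Ks F c)); auto.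
Qed.

Lemma follows_incl l l' X : follows l X -> incl l l' -> follows l' X.
Proof.
  rewrite !follows_iff_follows_from. intros Hf Hl. exact (follows_from_mono _ _ _ Hl Hf).
Qed.

Lemma wait_bin_inj L A B A' B' : wait_bin L A B = wait_bin L A' B' -> A = A' /\ B = B'.
Proof. destruct L; simpl; intros E; injection E; auto. Qed.

Lemma wait_quant_inj L x H x' H' : wait_quant L x H = wait_quant L x' H' -> x = x' /\ H = H'.
Proof. destruct L; simpl; intros E; injection E; auto. Qed.

Lemma wait_bin_neq_quant L A B x H : wait_bin L A B <> wait_quant L x H.
Proof. destruct L; discriminate. Qed.

Lemma is_proof_app l1 l2 : is_proof l1 -> is_proof l2 -> is_proof (l1 ++ l2).
Proof.
  intros H1 H2 i Hi. rewrite length_app in Hi.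
  destruct (Nat.lt_ge_cases i (length l1)).
  - rewrite app_nth1, firstn_app by auto.
    replace (i - length l1) with 0 by lia. rewrite firstn_0, app_nil_r. now apply H1.
  - rewrite app_nth2, firstn_app, firstn_all2 by lia.
    destruct (H2 (i - length l1)) as [Hp Hf]; [lia|]. split; auto.
    eapply follows_incl; eauto. intros Y HY; apply in_app_iff; auto.
Qed.

Lemma is_proof_snoc l X : is_proof l -> proper_seq X -> follows l X -> is_proof (l ++ [X]).
Proof.
  intros Hl Hp Hf i Hi. rewrite length_app in Hi; simpl in Hi.
  destruct (Nat.lt_ge_cases i (length l)).
  - rewrite app_nth1, firstn_app by auto.
    replace (i - length l) with 0 by lia. rewrite firstn_0, app_nil_r. now apply Hl.
  - replace i with (length l) by lia. rewrite app_nth2, Nat.sub_diag by lia. simpl.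
    now rewrite firstn_app, firstn_all, Nat.sub_diag, firstn_0, app_nil_r.
Qed.

Lemma provable_in_proof X : provable X -> exists l, is_proof l /\ In X l.
Proof.
  intros [l [Hl [Hne Hlast]]]; exists l; split; auto.
  destruct (exists_last Hne) as [l' [a ->]]. rewrite last_last in Hlast; subst.
  apply in_app_iff; simpl; auto.
Qed.

Lemma is_proof_collect Ls : (forall Y, In Y Ls -> provable Y) ->
  exists l, is_proof l /\ incl Ls l.
Proof.
  induction Ls as [|a Ls IH]; intros H.
  - exists []; split; [intros i Hi; simpl in Hi; lia | intros _ []].
  - destruct IH as [l [Hl Hin]]; [intros; apply H; simpl; auto|].
    destruct (provable_in_proof a) as [la [Hla Ha]]; [apply H; simpl; auto|].
    exists (la ++ l); split; [now apply is_proof_app|].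
    intros Y [<-|HY]; apply in_app_iff; auto.
Qed.

Fixpoint surface_splits (F : form) : list (ctx * form) :=
  (Hole, F) :: match F with
  | And A B => map (fun p => (CAndL (fst p) B, snd p)) (surface_splits A) ++
               map (fun p => (CAndR A (fst p), snd p)) (surface_splits B)
  | Or A B => map (fun p => (COrL (fst p) B, snd p)) (surface_splits A) ++
              map (fun p => (COrR A (fst p), snd p)) (surface_splits B)
  | Forall x A => map (fun p => (CForall x (fst p), snd p)) (surface_splits A)
  | Exists x A => map (fun p => (CExists x (fst p), snd p)) (surface_splits A)
  | _ => []
  end.

Lemma in_surface_splits_fill c G : In (c, G) (surface_splits (fill c G)).
Proof.
  induction c; [destruct G; simpl; auto|..]; simpl fill; simpl surface_splits;
    apply in_cons; try apply in_app_iff;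
    first [ solve [left; apply in_map_iff; exists (c, G); auto]
          | solve [right; apply in_map_iff; exists (c, G); auto]
          | apply in_map_iff; exists (c, G); auto ].
Qed.

Fixpoint list_splits (l : list form) : list (list form * form * list form) :=
  match l with
  | [] => []
  | a :: l' => ([], a, l') :: map (fun t => (a :: fst (fst t), snd (fst t), snd t)) (list_splits l')
  end.

Lemma in_list_splits Gs A Ks : In (Gs, A, Ks) (list_splits (Gs ++ A :: Ks)).
Proof.
  induction Gs; simpl; auto. right. apply in_map_iff. exists (Gs, A, Ks); auto.
Qed.

Definition positions (X : sequent) : list (pos * form) :=
  map (fun p => (PSucc (fst X) (fst p), snd p)) (surface_splits (snd X)) ++
  flat_map (fun t => map (fun p => (PAnte (fst (fst t)) (snd t) (snd X) (fst p), snd p))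
                         (surface_splits (snd (fst t))))
    (list_splits (fst X)).

Lemma in_positions_plug L G : In (L, G) (positions (plug L G)).
Proof.
  destruct L as [Gs c|Gs Ks F c]; unfold positions; simpl; apply in_app_iff.
  - left. apply in_map_iff. exists (c, G); split; auto. apply in_surface_splits_fill.
  - right. apply in_flat_map. exists (Gs, fill c G, Ks); split; [apply in_list_splits|].
    apply in_map_iff. exists (c, G); split; auto. apply in_surface_splits_fill.
Qed.

Lemma finite_collect (A : Type) (Pr : sequent -> Prop) (Q : A -> (sequent -> Prop) -> Prop) :
  (forall a (P P' : sequent -> Prop), Q a P -> (forall Y, P Y -> P' Y) -> Q a P') ->
  forall l, (forall a, In a l -> exists la, (forall Y, In Y la -> Pr Y) /\ Q a (fun Y => In Y la)) ->
  exists Ls, (forall Y, In Y Ls -> Pr Y) /\ forall a, In a l -> Q a (fun Y => In Y Ls).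
Proof.
  intros HQ l; induction l as [|a l IH]; intros H.
  - exists []; split; intros _ [].
  - destruct IH as [Ls [H1 H2]]; [intros; apply H; simpl; auto|].
    destruct (H a) as [la [H3 H4]]; [simpl; auto|].
    exists (la ++ Ls); split.
    + intros Y HY; apply in_app_iff in HY as [HY|HY]; auto.
    + intros b [<-|Hb]; eapply HQ; eauto; intros; apply in_app_iff; auto.
Qed.

Definition wait_duty (X : sequent) (a : pos * form) (Pr : sequent -> Prop) : Prop :=
  X = plug (fst a) (snd a) ->
  (forall A B, snd a = wait_bin (fst a) A B -> Pr (plug (fst a) A) /\ Pr (plug (fst a) B)) /\
  (forall x H, snd a = wait_quant (fst a) x H ->
     exists y, ~ occurs_seq y X /\ Pr (plug (fst a) (subst x (Var y) H))).

Lemma wait_duty_mono X a (P P' : sequent -> Prop) :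
  wait_duty X a P -> (forall Y, P Y -> P' Y) -> wait_duty X a P'.
Proof.
  intros Ha HPP' HX; destruct (Ha HX) as [Hbin Hquant]; split.
  - intros A B HG; destruct (Hbin A B HG); auto.
  - intros x H HG; destruct (Hquant x H HG) as [y []]; exists y; auto.
Qed.

Lemma wait_duty_finite Pr X a : wait_from Pr X ->
  exists la, (forall Y, In Y la -> Pr Y) /\ wait_duty X a (fun Y => In Y la).
Proof.
  intros [W1 [W2 _]]; destruct a as [L G]; unfold wait_duty; simpl.
  destruct (classic (X = plug L G)) as [HX|HX].
  2: { exists []; split; [intros _ []| contradiction]. }
  destruct (classic (exists A B, G = wait_bin L A B)) as [[A [B HG]]|Hbin].
  - exists [plug L A; plug L B]; split.
    + intros Y [<-|[<-|[]]]; apply (W1 L A B); subst; auto.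
    + intros _; split.
      * intros A' B' HG'. rewrite HG' in HG. apply wait_bin_inj in HG as [-> ->]; simpl; auto.
      * intros x H HG'. rewrite HG' in HG. now apply eq_sym, wait_bin_neq_quant in HG.
  - destruct (classic (exists x H, G = wait_quant L x H)) as [[x [H HG]]|Hquant].
    + destruct (W2 L x H) as [y [Hy HP]]; [subst; auto|].
      exists [plug L (subst x (Var y) H)]; split; [intros Y [<-|[]]; auto|].
      intros _; split; [intros A B HG'; exfalso; eauto|].
      intros x' H' HG'. rewrite HG' in HG. apply wait_quant_inj in HG as [-> ->].
      exists y; simpl; auto.
    + exists []; split; [intros _ []|].
      intros _; split; [intros A B HG'|intros x H HG']; exfalso; eauto.
Qed.

Lemma wait_from_finite Pr X : wait_from Pr X ->
  exists Ls, (forall Y, In Y Ls -> Pr Y) /\ wait_from (fun Y => In Y Ls) X.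
Proof.
  intros HW.
  destruct (finite_collect _ Pr (wait_duty X) (wait_duty_mono X) (positions X))
    as [Ls [H1 H2]]; [intros a _; now apply wait_duty_finite|].
  exists Ls; split; auto. split; [|split]; [..|apply HW].
  - intros L A B HX. apply (H2 (L, wait_bin L A B)); auto. rewrite HX; apply in_positions_plug.
  - intros L x H HX. apply (H2 (L, wait_quant L x H)); auto. rewrite HX; apply in_positions_plug.
Qed.

Lemma follows_from_finite Pr X : follows_from Pr X ->
  exists Ls, (forall Y, In Y Ls -> Pr Y) /\ follows_from (fun Y => In Y Ls) X.
Proof.
  intros [[L [G [G' [H1 [H2 H3]]]]]|[[Gs [E [Ks [F [H1 H2]]]]]|HW]].
  - exists [plug L G']; split; [intros Y [<-|[]]; auto|]. left; exists L, G, G'; simpl; auto.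
  - exists [(Gs ++ E :: Ks ++ [E], F)]; split; [intros Y [<-|[]]; auto|].
    right; left; exists Gs, E, Ks, F; simpl; auto.
  - destruct (wait_from_finite _ _ HW) as [Ls []]; exists Ls; split; auto. right; right; auto.
Qed.

Lemma provable_of_follows X : proper_seq X -> follows_from provable X -> provable X.
Proof.
  intros Hp Hf. destruct (follows_from_finite _ _ Hf) as [Ls [H1 H2]].
  destruct (is_proof_collect Ls H1) as [l [Hl Hin]].
  exists (l ++ [X]); split; [|split].
  - apply is_proof_snoc; auto. apply follows_iff_follows_from.
    exact (follows_from_mono _ _ _ Hin H2).
  - now destruct l.
  - apply last_last.
Qed.

(** * Derivations of bounded height *)

Fixpoint derivable (n : nat) (X : sequent) : Prop :=
  match n with
  | 0 => False
  | S m => proper_seq X /\ follows_from (derivable m) X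
  end.

Lemma derivable_S n X : derivable n X -> derivable (S n) X.
Proof.
  revert X; induction n as [|n IH]; intros X H; [destruct H|].
  destruct H as [Hp Hf]. split; auto. exact (follows_from_mono _ _ _ IH Hf).
Qed.

Lemma derivable_mono n m X : n <= m -> derivable n X -> derivable m X.
Proof. induction 1; auto using derivable_S. Qed.

Lemma provable_of_derivable n X : derivable n X -> provable X.
Proof.
  revert X; induction n as [|n IH]; intros X H; [destruct H|].
  destruct H as [Hp Hf]. apply provable_of_follows; auto. exact (follows_from_mono _ _ _ IH Hf).
Qed.

Lemma derivable_of_is_proof l : is_proof l ->
  forall i, i < length l -> derivable (S i) (nth i l ([], Top)).
Proof.
  intros Hl i; induction i as [i IH] using (well_founded_induction lt_wf); intros Hi.
  destruct (Hl i Hi) as [Hp Hf]. split; auto.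
  apply follows_iff_follows_from in Hf. refine (follows_from_mono _ _ _ _ Hf).
  intros Y HY. destruct (In_nth _ _ ([], Top) HY) as [j [Hj <-]].
  rewrite length_firstn in Hj. rewrite nth_firstn.
  destruct (Nat.ltb_spec j i); [|lia].
  apply derivable_mono with (S j); [lia|]. apply IH; lia.
Qed.

Lemma derivable_of_provable X : provable X -> exists n, derivable n X.
Proof.
  intros Hpr. destruct (provable_in_proof X Hpr) as [l [Hl HX]].
  destruct (In_nth _ _ ([], Top) HX) as [i [Hi <-]].
  exists (S i). now apply derivable_of_is_proof.
Qed.

(** * Renaming a variable preserves derivation height *)

Fixpoint subst_ctx (y : nat) (s : term) (c : ctx) : ctx :=
  match c with
  | Hole => Hole
  | CAndL c B => CAndL (subst_ctx y s c) (subst y s B)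
  | CAndR A c => CAndR (subst y s A) (subst_ctx y s c)
  | COrL c B => COrL (subst_ctx y s c) (subst y s B)
  | COrR A c => COrR (subst y s A) (subst_ctx y s c)
  | CForall x c => CForall x (subst_ctx y s c)
  | CExists x c => CExists x (subst_ctx y s c)
  end.

Definition subst_pos (y : nat) (s : term) (L : pos) : pos :=
  match L with
  | PSucc Gs c => PSucc (map (subst y s) Gs) (subst_ctx y s c)
  | PAnte Gs Ks F c => PAnte (map (subst y s) Gs) (map (subst y s) Ks) (subst y s F) (subst_ctx y s c)
  end.

Definition rename_seq (y z : nat) (X : sequent) : sequent :=
  (map (subst y (Var z)) (fst X), subst y (Var z) (snd X)).

Lemma subst_fill y s c G : ~ In y (bound_vars (fill c G)) ->
  subst y s (fill c G) = fill (subst_ctx y s c) (subst y s G).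
Proof.
  induction c; simpl; intros H; rewrite ?in_app_iff in H; auto;
    try (rewrite IHc by tauto; reflexivity).
  all: case_eqb; [subst; tauto|]; now rewrite IHc by tauto.
Qed.

Lemma rename_plug y z L G : ~ bound_in_seq y (plug L G) ->
  rename_seq y z (plug L G) = plug (subst_pos y (Var z) L) (subst y (Var z) G).
Proof.
  intros H; assert (Hc := in_plug_seq_forms L G).
  destruct L as [Gs c|Gs Ks F c]; unfold rename_seq; simpl; rewrite ?map_app; simpl;
    rewrite subst_fill; auto; intros Hb; apply H; eexists; eauto.
Qed.

Lemma subst_ctx_fresh y s c G : ~ In y (vars (fill c G)) -> subst_ctx y s c = c.
Proof.
  induction c; simpl; intros H; rewrite ?in_app_iff in H; f_equal; auto;
    try (apply IHc; tauto); apply subst_fresh; tauto.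
Qed.

Lemma subst_pos_fresh y s L G : ~ occurs_seq y (plug L G) -> subst_pos y s L = L.
Proof.
  intros H.
  assert (Hf : forall F, In F (seq_forms (plug L G)) -> subst y s F = F)
    by (intros F HF; apply subst_fresh; intro; apply H; exists F; auto).
  assert (Hc := Hf _ (in_plug_seq_forms L G)).
  assert (Hc' : ~ In y (vars (fill (pos_ctx L) G)))
    by (intro; apply H; eexists; split; [apply in_plug_seq_forms | eauto]).
  destruct L as [Gs c|Gs Ks F c]; simpl in *; f_equal;
    try (erewrite subst_ctx_fresh; eauto);
    try (erewrite map_ext_in, map_id; [reflexivity|]; intros F' HF'; apply Hf);
    rewrite ?in_app_iff; simpl; auto.
Qed.

Lemma subst_eq_fill_inv y s c' G' F : subst y s F = fill c' G' -> is_choice G' ->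
  ~ In y (bound_vars F) ->
  exists c G, F = fill c G /\ c' = subst_ctx y s c /\ G' = subst y s G.
Proof.
  revert G' F; induction c'; intros G' F Heq Hc Hb; [exists Hole, F; simpl in *; auto|..].
  1-4: destruct F; simpl in Heq; try (destruct (Nat.eqb _ _)); try discriminate;
       injection Heq; intros; subst; simpl in Hb; rewrite in_app_iff in Hb.
  5-6: destruct F; simpl in Heq; try discriminate; try (destruct (Nat.eqb_spec x0 y); discriminate);
       simpl in Hb; destruct (Nat.eqb_spec x0 y); [subst; tauto|]; injection Heq; intros; subst.
  - destruct (IHc' _ _ H0 Hc) as [c [G [-> [-> ->]]]]; [tauto|]. exists (CAndL c F2), G; auto.
  - destruct (IHc' _ _ H Hc) as [c [G [-> [-> ->]]]]; [tauto|]. exists (CAndR F1 c), G; auto.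
  - destruct (IHc' _ _ H0 Hc) as [c [G [-> [-> ->]]]]; [tauto|]. exists (COrL c F2), G; auto.
  - destruct (IHc' _ _ H Hc) as [c [G [-> [-> ->]]]]; [tauto|]. exists (COrR F1 c), G; auto.
  - destruct (IHc' _ _ H Hc) as [c [G [-> [-> ->]]]]; [tauto|]. exists (CForall x c), G; auto.
  - destruct (IHc' _ _ H Hc) as [c [G [-> [-> ->]]]]; [tauto|]. exists (CExists x c), G; auto.
Qed.

Lemma rename_eq_plug_inv y z L' G' X : rename_seq y z X = plug L' G' -> is_choice G' ->
  ~ bound_in_seq y X ->
  exists L G, X = plug L G /\ L' = subst_pos y (Var z) L /\ G' = subst y (Var z) G.
Proof.
  destruct X as [Gs F]; unfold rename_seq; simpl; intros Heq Hc Hb.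
  destruct L' as [Gs' c'|Gs' Ks' F' c']; simpl in Heq; injection Heq; intros; subst.
  - destruct (subst_eq_fill_inv _ _ _ _ _ H Hc) as [c [G [-> [-> ->]]]].
    + intro; apply Hb; exists F; simpl; auto.
    + exists (PSucc Gs c), G; auto.
  - destruct (map_eq_app _ _ _ _ H0) as [l1 [l2 [-> [H1 H2]]]].
    destruct (map_eq_cons _ _ H2) as [a [tl [-> [H3 H4]]]].
    destruct (subst_eq_fill_inv _ _ _ _ _ H3 Hc) as [c [G [-> [-> ->]]]].
    + intro; apply Hb; exists a; simpl; rewrite in_app_iff; simpl; auto.
    + exists (PAnte l1 tl F c), G; subst; auto.
Qed.

Lemma subst_eq_wait_bin_inv y s L G A B : subst y s G = wait_bin (subst_pos y s L) A B ->
  exists H0 H1, G = wait_bin L H0 H1 /\ A = subst y s H0 /\ B = subst y s H1.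
Proof.
  destruct L, G; simpl; intros H; try (destruct (Nat.eqb _ _)); try discriminate;
    injection H; intros; subst; eauto.
Qed.

Lemma subst_eq_wait_quant_inv y s L G x H' : subst y s G = wait_quant (subst_pos y s L) x H' ->
  ~ In y (bound_vars G) -> exists H, G = wait_quant L x H /\ H' = subst y s H.
Proof.
  intros H Hb; destruct L, G; simpl in H; try discriminate;
    try (destruct (Nat.eqb_spec x0 y); discriminate);
    simpl in Hb; destruct (Nat.eqb_spec x0 y); try (subst; tauto);
    injection H; intros; subst; eauto.
Qed.

Lemma subst_choose_bin y s L A B :
  subst y s (choose_bin L A B) = choose_bin (subst_pos y s L) (subst y s A) (subst y s B).
Proof. now destruct L. Qed.

Lemma subst_choose_quant y s L x H : x <> y ->
  subst y s (choose_quant L x H) = choose_quant (subst_pos y s L) x (subst y s H).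
Proof. intros Hxy; destruct L; simpl; case_eqb; congruence. Qed.

Lemma seq_forms_rename y z X :
  seq_forms (rename_seq y z X) = map (subst y (Var z)) (seq_forms X).
Proof. reflexivity. Qed.

Lemma bound_in_rename y z X v : bound_in_seq v (rename_seq y z X) -> bound_in_seq v X.
Proof.
  intros [F [HF Hv]]. rewrite seq_forms_rename, in_map_iff in HF. destruct HF as [F0 [<- HF0]].
  rewrite bound_vars_subst in Hv. exists F0; auto.
Qed.

Lemma free_in_rename y z X v : free_in_seq v (rename_seq y z X) -> free_in_seq v X \/ v = z.
Proof.
  intros [F [HF Hv]]. rewrite seq_forms_rename, in_map_iff in HF. destruct HF as [F0 [<- HF0]].
  destruct (in_free_vars_subst _ _ _ _ Hv) as [[]|[<-|[]]]; auto. left; exists F0; auto.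
Qed.

Lemma occurs_in_rename y z X v : occurs_seq v (rename_seq y z X) -> occurs_seq v X \/ v = z.
Proof.
  intros [F [HF Hv]]. rewrite seq_forms_rename, in_map_iff in HF. destruct HF as [F0 [<- HF0]].
  destruct (in_vars_subst _ _ _ _ Hv) as [|[<-|[]]]; auto. left; exists F0; auto.
Qed.

Lemma proper_rename y z X : proper_seq X -> ~ bound_in_seq z X -> proper_seq (rename_seq y z X).
Proof.
  intros Hp Hz v Hf Hb. apply bound_in_rename in Hb.
  destruct (free_in_rename _ _ _ _ Hf) as [Hf'|<-]; [exact (Hp v Hf' Hb) | auto].
Qed.

Lemma elem_seq_rename y z X : elem_seq (rename_seq y z X) = subst y (Var z) (elem_seq X).
Proof.
  destruct X as [Gs F]. unfold elem_seq, rename_seq; simpl. rewrite map_map.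
  rewrite (map_ext _ (fun F => subst y (Var z) (elem F))) by apply elem_subst.
  now rewrite <- map_map, big_and_subst, neg_subst, elem_subst.
Qed.

Lemma stable_rename y z X : stable X -> ~ bound_in_seq z X -> stable (rename_seq y z X).
Proof.
  destruct X as [Gs F]; intros Hs Hz M e. unfold stable. rewrite elem_seq_rename.
  apply sat_subst_var; [|apply Hs].
  unfold elem_seq; simpl; rewrite in_app_iff, bound_vars_neg. intros [H|H].
  - destruct (in_bound_vars_big_and _ _ H) as [F' [HF' Hv]].
    apply in_map_iff in HF' as [F0 [<- HF0]].
    apply Hz. exists F0; split; [simpl; auto|]. now apply in_bound_vars_elem.
  - apply Hz. exists F; split; [simpl; auto|]. now apply in_bound_vars_elem.
Qed.

Lemma wait_bin_is_choice L A B : is_choice (wait_bin L A B).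
Proof. now destruct L. Qed.

Lemma wait_quant_is_choice L x H : is_choice (wait_quant L x H).
Proof. now destruct L. Qed.

Lemma bound_vars_wait_bin L A B v : In v (bound_vars A) \/ In v (bound_vars B) ->
  In v (bound_vars (wait_bin L A B)).
Proof. destruct L; simpl; apply in_app_iff. Qed.

Lemma bound_vars_wait_quant L x H : In x (bound_vars (wait_quant L x H)) /\
  (forall v, In v (bound_vars H) -> In v (bound_vars (wait_quant L x H))) /\
  (forall v, In v (vars H) -> In v (vars (wait_quant L x H))).
Proof. destruct L; simpl; auto. Qed.

Lemma bound_vars_choose_quant L x H : In x (bound_vars (choose_quant L x H)) /\
  (forall v, In v (bound_vars H) -> In v (bound_vars (choose_quant L x H))).
Proof. destruct L; simpl; auto. Qed.

Lemma choose_step_is_choice L G G' P : choose_step L G G' P -> is_choice G.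
Proof. destruct L; intros [[A [B [i [-> _]]]]|[x [H [t [-> _]]]]]; simpl; auto. Qed.

Lemma choose_step_bound L G G' P v : choose_step L G G' P ->
  In v (bound_vars G') -> In v (bound_vars G).
Proof.
  intros [[A [B [i [-> ->]]]]|[x [H [t [-> [-> _]]]]]] Hv.
  - destruct L, i; simpl; apply in_app_iff; auto.
  - rewrite bound_vars_subst in Hv. now apply bound_vars_choose_quant.
Qed.

Lemma bound_in_replicate Gs E Ks F v : bound_in_seq v (Gs ++ E :: Ks ++ [E], F) ->
  bound_in_seq v (Gs ++ E :: Ks, F).
Proof.
  intros [F' [HF Hv]]; exists F'; split; auto. simpl in *.
  rewrite !in_app_iff in *; simpl in *; rewrite in_app_iff in HF; simpl in HF; tauto.
Qed.

Section RenameClosed.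

Variable Pr : sequent -> Prop.
Hypothesis Pr_rename : forall X y z, Pr X -> ~ bound_in_seq y X -> ~ bound_in_seq z X ->
  Pr (rename_seq y z X).

Lemma instance_rename L x H y0 y1 :
  ~ occurs_seq y0 (plug L (wait_quant L x H)) -> ~ bound_in_seq y1 (plug L (wait_quant L x H)) ->
  Pr (plug L (subst x (Var y0) H)) -> Pr (plug L (subst x (Var y1) H)).
Proof.
  intros Hy0 Hy1 HP.
  destruct (bound_vars_wait_quant L x H) as [_ [HbH HvH]].
  assert (HB : forall t v, bound_in_seq v (plug L (subst x t H)) ->
                           bound_in_seq v (plug L (wait_quant L x H)))
    by (intros t v; apply bound_in_plug_mono; intros w; rewrite bound_vars_subst; auto).
  assert (Hb0 : ~ bound_in_seq y0 (plug L (subst x (Var y0) H)))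
    by (intro Hb; apply Hy0, occurs_of_bound, (HB _ _ Hb)).
  assert (E := Pr_rename _ y0 y1 HP Hb0 (fun Hb => Hy1 (HB _ _ Hb))).
  rewrite rename_plug, (subst_pos_fresh y0 (Var y1) L (wait_quant L x H)),
    subst_var_comp in E; auto.
  intro Hv; apply Hy0, occurs_plug; auto.
Qed.

Lemma choose_rename y z L G G' : choose_step L G G' (plug L G') -> Pr (plug L G') ->
  ~ bound_in_seq y (plug L G) -> ~ bound_in_seq z (plug L G) ->
  follows_from Pr (rename_seq y z (plug L G)).
Proof.
  intros Hc HP Hy Hz.
  assert (HbP : forall v, bound_in_seq v (plug L G') -> bound_in_seq v (plug L G))
    by (intros v; apply bound_in_plug_mono; intros; eapply choose_step_bound; eauto).
  left. exists (subst_pos y (Var z) L), (subst y (Var z) G), (subst y (Var z) G').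
  rewrite <- (rename_plug y z L G') by auto.
  split; [now apply rename_plug|]. split; [|apply Pr_rename; auto].
  destruct Hc as [[A [B [i [-> ->]]]]|[x [H [t [-> [-> Ht]]]]]].
  - left. exists (subst y (Var z) A), (subst y (Var z) B), i.
    split; [apply subst_choose_bin | now destruct i].
  - destruct (bound_vars_choose_quant L x H) as [Hx HbH].
    right. exists x, (subst y (Var z) H), (subst_term y (Var z) t). split; [|split].
    + apply subst_choose_quant. intros ->; apply Hy, bound_in_plug; auto.
    + apply subst_comm; [intros ->; apply Hy, bound_in_plug; auto
                        | simpl; intros [<-|[]]; apply Hz, bound_in_plug; auto
                        | intro; apply Hy, bound_in_plug; auto].
    + destruct Ht as [[c0 ->]|[w [-> Hw]]]; [left; exists c0; auto|].
      right. simpl. destruct (Nat.eqb_spec w y).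
      * exists z; split; auto. intros Hb. apply Hz, HbP, (bound_in_rename y z), Hb.
      * exists w; split; auto. intros Hb. apply Hw, (bound_in_rename y z), Hb.
Qed.

Lemma replicate_rename y z Gs E Ks F : Pr (Gs ++ E :: Ks ++ [E], F) ->
  ~ bound_in_seq y (Gs ++ E :: Ks, F) -> ~ bound_in_seq z (Gs ++ E :: Ks, F) ->
  follows_from Pr (rename_seq y z (Gs ++ E :: Ks, F)).
Proof.
  intros HP Hy Hz. right; left.
  exists (map (subst y (Var z)) Gs), (subst y (Var z) E), (map (subst y (Var z)) Ks),
    (subst y (Var z) F).
  unfold rename_seq; simpl; rewrite map_app; split; auto.
  assert (Hs := Pr_rename _ y z HP (fun H => Hy (bound_in_replicate _ _ _ _ _ H))
                  (fun H => Hz (bound_in_replicate _ _ _ _ _ H))).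
  unfold rename_seq in Hs; simpl in Hs. rewrite map_app in Hs; simpl in Hs.
  now rewrite map_app in Hs.
Qed.

Lemma wait_rename y z X : wait_from Pr X -> ~ bound_in_seq y X -> ~ bound_in_seq z X ->
  wait_from Pr (rename_seq y z X).
Proof.
  intros [W1 [W2 W3]] Hy Hz. split; [|split]; [..|now apply stable_rename].
  - intros L' A B HX.
    destruct (rename_eq_plug_inv _ _ _ _ _ HX (wait_bin_is_choice _ _ _) Hy)
      as [L [G [-> [-> HG]]]].
    destruct (subst_eq_wait_bin_inv _ _ _ _ _ _ (eq_sym HG)) as [H0 [H1 [-> [-> ->]]]].
    destruct (W1 L H0 H1 eq_refl) as [P0 P1].
    assert (Hb : forall H', (forall v, In v (bound_vars H') -> In v (bound_vars (wait_bin L H0 H1))) ->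
               forall u, ~ bound_in_seq u (plug L (wait_bin L H0 H1)) -> ~ bound_in_seq u (plug L H'))
      by (intros H' HH' u Hu Hb; eapply Hu, bound_in_plug_mono; eauto).
    split; rewrite <- rename_plug; try apply Pr_rename; auto;
      apply Hb; auto; intros; apply bound_vars_wait_bin; auto.
  - intros L' x H' HX.
    destruct (rename_eq_plug_inv _ _ _ _ _ HX (wait_quant_is_choice _ _ _) Hy)
      as [L [G [-> [-> HG]]]].
    destruct (subst_eq_wait_quant_inv _ _ _ _ _ _ (eq_sym HG)) as [H [-> ->]];
      [intro; apply Hy, bound_in_plug; auto|].
    destruct (W2 L x H eq_refl) as [y0 [Hy0 P0]].
    destruct (fresh_var (plug L (wait_quant L x H)) [y; z]) as [y1 [Hy1 Hy1']]; simpl in Hy1'.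
    destruct (bound_vars_wait_quant L x H) as [Hx [HbH _]].
    assert (HB : forall u, ~ bound_in_seq u (plug L (wait_quant L x H)) ->
                           ~ bound_in_seq u (plug L (subst x (Var y1) H)))
      by (intros u Hu Hb; apply Hu; revert Hb; apply bound_in_plug_mono;
          intros w; rewrite bound_vars_subst; auto).
    assert (P1 := instance_rename L x H y0 y1 Hy0 (fun Hb => Hy1 (occurs_of_bound _ _ Hb)) P0).
    exists y1; split.
    { intros Ho; destruct (occurs_in_rename _ _ _ _ Ho) as [Ho'| ->]; [exact (Hy1 Ho') | tauto]. }
    assert (E := Pr_rename _ y z P1 (HB _ Hy) (HB _ Hz)).
    assert (Hxy : x <> y) by (intros ->; apply Hy, bound_in_plug; auto).
    assert (Hxz : ~ In x (term_vars (Var z)))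
      by (simpl; intros [<-|[]]; apply Hz, bound_in_plug; auto).
    assert (HyH : ~ In y (bound_vars H)) by (intro; apply Hy, bound_in_plug; auto).
    rewrite rename_plug, subst_comm in E by auto using HB.
    simpl in E. destruct (Nat.eqb_spec y1 y); [subst; tauto | exact E].
Qed.

Lemma follows_from_rename y z X : follows_from Pr X ->
  ~ bound_in_seq y X -> ~ bound_in_seq z X -> follows_from Pr (rename_seq y z X).
Proof.
  intros [[L [G [G' [-> [Hc HP]]]]]|[[Gs [E [Ks [F [-> HP]]]]]|HW]] Hy Hz.
  - eapply choose_rename; eauto.
  - now apply replicate_rename.
  - right; right; now apply wait_rename.
Qed.

End RenameClosed.

Lemma derivable_rename n : forall X y z, derivable n X ->
  ~ bound_in_seq y X -> ~ bound_in_seq z X -> derivable n (rename_seq y z X).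
Proof.
  induction n as [|n IH]; intros X y z HD Hy Hz; [destruct HD|].
  destruct HD as [Hp Hf].
  split; [now apply proper_rename | now apply follows_from_rename].
Qed.

(** * Inversion of Wait *)

Definition wait_reduct (L : pos) (G G' : form) (z : nat) : Prop :=
  (exists A B, G = wait_bin L A B /\ (G' = A \/ G' = B)) \/
  (exists x H, G = wait_quant L x H /\ G' = subst x (Var z) H).

Lemma wait_reduct_is_choice L G G' z : wait_reduct L G G' z -> is_choice G.
Proof.
  intros [[A [B [-> _]]]|[x [H [-> _]]]]; [apply wait_bin_is_choice | apply wait_quant_is_choice].
Qed.

Lemma wait_reduct_vars_within L G G' z : wait_reduct L G G' z -> vars_within G G' z.
Proof.
  unfold vars_within.
  intros [[A [B [-> [-> | ->]]]]|[x [H [-> ->]]]]; destruct L; simpl;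
    rewrite ?bound_vars_subst; repeat split; intros v Hv; rewrite ?in_app_iff; auto.
  all: try (destruct (in_free_vars_subst _ _ _ _ Hv) as [[]|[<-|[]]]; auto;
            left; apply filter_In; split; auto; case_eqb; auto).
  all: destruct (in_vars_subst _ _ _ _ Hv) as [|[<-|[]]]; auto.
Qed.

Lemma wait_reduct_bound L G G' z v : wait_reduct L G G' z ->
  In v (bound_vars G') -> In v (bound_vars G).
Proof. intros Hr; apply (wait_reduct_vars_within _ _ _ _ Hr). Qed.

Lemma wait_reduct_choice_count L G G' z : wait_reduct L G G' z -> choice_count G' < choice_count G.
Proof.
  destruct L; intros [[A [B [-> [-> | ->]]]]|[x [H [-> ->]]]]; simpl;
    rewrite ?choice_count_subst; lia.
Qed.

Lemma wait_reduct_same_side L L' G G' z : in_succ L = in_succ L' ->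
  wait_reduct L G G' z -> wait_reduct L' G G' z.
Proof. destruct L, L'; simpl; congruence || auto. Qed.

Lemma choose_step_same_side L L' G G' P P' : in_succ L = in_succ L' ->
  (forall v, bound_in_seq v P' -> bound_in_seq v P) ->
  choose_step L G G' P -> choose_step L' G G' P'.
Proof.
  intros Hk HP [[A [B [i [-> ->]]]]|[x [H [t [-> [-> Ht]]]]]].
  - left; exists A, B, i; destruct L, L'; simpl in Hk; try discriminate; auto.
  - right; exists x, H, t; split; [destruct L, L'; simpl in Hk; try discriminate; auto|].
    split; auto.
    destruct Ht as [[c ->]|[w [-> Hw]]]; [left; exists c | right; exists w]; auto.
Qed.

Lemma wait_reduct_not_choose L G G' z G'' P :
  wait_reduct L G G' z -> ~ choose_step L G G'' P.
Proof.
  destruct L; intros [[A [B [-> _]]]|[x [H [-> _]]]]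
    [[A' [B' [i [HH _]]]]|[x' [H' [t [HH _]]]]]; discriminate.
Qed.

Section Inversion.

Variable Pr : sequent -> Prop.
Hypothesis Pr_rename : forall X y z, Pr X -> ~ bound_in_seq y X -> ~ bound_in_seq z X ->
  Pr (rename_seq y z X).
Hypothesis Pr_inversion : forall L G G' z, Pr (plug L G) -> wait_reduct L G G' z ->
  ~ bound_in_seq z (plug L G) -> Pr (plug L G').

Lemma wait_inversion L G G' z : wait_from Pr (plug L G) -> wait_reduct L G G' z ->
  ~ bound_in_seq z (plug L G) -> Pr (plug L G').
Proof.
  intros [W1 [W2 _]] [[A [B [-> [-> | ->]]]]|[x [H [-> ->]]]] Hz;
    [apply (W1 L A B eq_refl) | apply (W1 L A B eq_refl) |].
  destruct (W2 L x H eq_refl) as [y0 [Hy0 P0]].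
  exact (instance_rename Pr Pr_rename L x H y0 z Hy0 Hz P0).
Qed.

Lemma choose_inversion L G G' z L2 G2 G2' : plug L G = plug L2 G2 ->
  wait_reduct L G G' z -> choose_step L2 G2 G2' (plug L2 G2') -> Pr (plug L2 G2') ->
  ~ bound_in_seq z (plug L G) -> follows_from Pr (plug L G').
Proof.
  intros HX Hr Hc HP Hz.
  destruct (plug_eq_cases _ _ _ _ HX (wait_reduct_is_choice _ _ _ _ Hr)
              (choose_step_is_choice _ _ _ _ Hc))
    as [[-> ->]|[Q [M1 [M2 [HM1 [HM2 [<- [<- [HS1 HS2]]]]]]]]];
    [exfalso; eapply wait_reduct_not_choose; eauto|].
  assert (HP' : Pr (plug (M1 G2') G')).
  { apply Pr_inversion with G z.
    - now rewrite HM1, <- HM2.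
    - now apply wait_reduct_same_side with (M1 G2); [apply (proj1 (HS1 G2'))|].
    - rewrite HM1, <- HM2. intro Hb. apply Hz. rewrite HX.
      revert Hb; apply bound_in_plug_mono; intros; eapply choose_step_bound; eauto. }
  left. exists (M2 G'), G2, G2'. split; [|split].
  - now rewrite HM2, <- HM1.
  - apply choose_step_same_side with (M2 G) (plug (M2 G) G2'); auto.
    + apply (HS2 G').
    + intros v; rewrite !HM2, <- !HM1; apply bound_in_plug_mono.
      intros; eapply wait_reduct_bound; eauto.
  - now rewrite HM2, <- HM1.
Qed.

Lemma replicate_inversion L G G' z Gs E Ks F : plug L G = (Gs ++ E :: Ks, F) ->
  wait_reduct L G G' z -> Pr (Gs ++ E :: Ks ++ [E], F) ->
  ~ bound_in_seq z (plug L G) -> follows_from Pr (plug L G').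
Proof.
  intros HX Hr HP Hz.
  assert (Hz' : ~ bound_in_seq z (Gs ++ E :: Ks ++ [E], F))
    by (intro Hb; apply Hz; rewrite HX; now apply bound_in_replicate).
  right; left.
  destruct L as [Gs0 c|Gs1 Ks1 F1 c]; simpl in HX; injection HX; intros; subst.
  - exists Gs, E, Ks, (fill c G'). split; auto.
    exact (Pr_inversion (PSucc (Gs ++ E :: Ks ++ [E]) c) G G' z HP Hr Hz').
  - destruct (app_cons_eq_cases _ _ _ _ _ _ H0) as [[-> [<- ->]]|[[m [-> ->]]|[m [-> ->]]]].
    + (* the replicated formula is the inverted one: invert both of its copies *)
      assert (P1 : Pr (plug (PAnte Gs (Ks ++ [fill c G]) F c) G'))
        by (apply Pr_inversion with G z; auto).
      assert (P2 : Pr (plug (PAnte (Gs ++ fill c G' :: Ks) [] F c) G')).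
      { apply Pr_inversion with G z; auto; simpl; rewrite <- app_assoc; auto.
        intro Hb. apply Hz'. revert Hb.
        apply (bound_in_plug_mono G G' (fun v => wait_reduct_bound _ _ _ _ v Hr)
                 (PAnte Gs (Ks ++ [fill c G]) F c)). }
      simpl in P2. rewrite <- app_assoc in P2.
      exists Gs, (fill c G'), Ks, F. split; auto.
    + assert (P1 : Pr (plug (PAnte Gs1 (m ++ E :: Ks ++ [E]) F c) G')).
      { apply Pr_inversion with G z; auto; simpl; rewrite <- app_assoc in HP, Hz'; auto. }
      exists (Gs1 ++ fill c G' :: m), E, Ks, F. simpl; rewrite <- !app_assoc. split; auto.
    + assert (P1 : Pr (plug (PAnte (Gs ++ E :: m) (Ks1 ++ [E]) F c) G')).
      { apply Pr_inversion with G z; auto; simpl; rewrite <- app_assoc; simpl;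
          rewrite <- app_assoc in HP, Hz'; auto. }
      exists Gs, E, (m ++ fill c G' :: Ks1), F. simpl in P1 |- *.
      rewrite <- !app_assoc in P1 |- *. split; auto. now rewrite <- app_assoc.
Qed.

End Inversion.

Lemma derivable_inversion n : forall L G G' z, derivable n (plug L G) ->
  wait_reduct L G G' z -> ~ bound_in_seq z (plug L G) -> derivable n (plug L G').
Proof.
  induction n as [|n IH]; intros L G G' z HD Hr Hz; [destruct HD|].
  destruct HD as [Hp Hf].
  assert (Hp' : proper_seq (plug L G'))
    by (eapply proper_plug_vars_within; eauto; eapply wait_reduct_vars_within; eauto).
  destruct Hf as [[L2 [G2 [G2' [HX [Hc HP]]]]]|[[Gs [E [Ks [F [HX HP]]]]]|HW]].
  - split; auto. eapply choose_inversion; eauto.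
  - split; auto. eapply replicate_inversion; eauto.
  - apply derivable_S. eapply wait_inversion; eauto. intros; now apply derivable_rename.
Qed.

Lemma provable_inversion L G G' z : provable (plug L G) -> wait_reduct L G G' z ->
  ~ bound_in_seq z (plug L G) -> provable (plug L G').
Proof.
  intros HP Hr Hz. destruct (derivable_of_provable _ HP) as [n Hn].
  exact (provable_of_derivable _ _ (derivable_inversion n L G G' z Hn Hr Hz)).
Qed.

(** * Admissibility of the introduction rules *)

Lemma sat_elem_fill_top M c G : no_and c -> elem G = Top -> forall e, sat M e (elem (fill c G)).
Proof.
  induction c; simpl; intros Hc HG e; try contradiction.
  - now rewrite HG.
  - left; auto.
  - right; auto.
  - intros d; auto.
  - exists (dom_inh M); auto.
Qed.

Lemma not_sat_elem_fill_bot M c G : no_or c -> elem G = Bot ->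
  forall e, ~ sat M e (elem (fill c G)).
Proof.
  induction c; simpl; intros Hc HG e; try contradiction.
  - now rewrite HG.
  - intros []; eapply IHc; eauto.
  - intros []; eapply IHc; eauto.
  - intros H; exact (IHc Hc HG _ (H (dom_inh M))).
  - intros [d H]; exact (IHc Hc HG _ H).
Qed.

Lemma stable_plug L G : intro_pos L -> elem G = (if in_succ L then Top else Bot) ->
  stable (plug L G).
Proof.
  destruct L as [Gs c|Gs Ks F c]; simpl; intros Hc HG M e; unfold elem_seq; simpl.
  - right. now apply sat_elem_fill_top.
  - left. apply sat_neg. intros Hs. apply (not_sat_elem_fill_bot M c G Hc HG e).
    apply (sat_big_and _ _ _ _ Hs), in_map, in_app_iff; simpl; auto.
Qed.

Lemma elem_wait_bin L A B : elem (wait_bin L A B) = if in_succ L then Top else Bot.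
Proof. now destruct L. Qed.

Lemma elem_wait_quant L x H : elem (wait_quant L x H) = if in_succ L then Top else Bot.
Proof. now destruct L. Qed.

Lemma wait_bin_same_side L L' A B : in_succ L = in_succ L' -> wait_bin L A B = wait_bin L' A B.
Proof. destruct L, L'; simpl; congruence. Qed.

Lemma wait_quant_same_side L L' x H : in_succ L = in_succ L' ->
  wait_quant L x H = wait_quant L' x H.
Proof. destruct L, L'; simpl; congruence. Qed.

Definition seq_choice_count (X : sequent) : nat :=
  choice_count (snd X) + list_sum (map choice_count (fst X)).

Lemma seq_choice_count_plug_lt L A B : choice_count A < choice_count B ->
  seq_choice_count (plug L A) < seq_choice_count (plug L B).
Proof.
  intros H.
  assert (Hc : forall c, choice_count (fill c A) < choice_count (fill c B))
    by (induction c; simpl; lia).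
  destruct L as [Gs c|Gs Ks F c]; unfold seq_choice_count; simpl.
  - specialize (Hc c); lia.
  - rewrite !map_app, !list_sum_app; simpl. specialize (Hc c); lia.
Qed.

(* [y] is the eigenvariable of the quantifier rules. *)
Definition intro_premises (L : pos) (G : form) (y : nat) : Prop :=
  (exists G0 G1, G = wait_bin L G0 G1 /\ provable (plug L G0) /\ provable (plug L G1)) \/
  (exists x H, G = wait_quant L x H /\ ~ occurs_seq y (plug L G) /\
               provable (plug L (subst x (Var y) H))).

(* If Wait reduces another choice occurrence [G'] of the conclusion, the premises of the
   introduction can be reduced in the same way (by inversion), giving an introduction
   instance with fewer choice operators. *)
Lemma intro_premises_reduct L G y L' G' G'' z :
  apart L G' L' G -> wait_reduct L' G' G'' z -> ~ occurs_seq z (plug L G) -> z <> y ->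
  intro_premises L G y ->
  exists L'', same_kind L L'' /\ plug L' G'' = plug L'' G /\ intro_premises L'' G y.
Proof.
  intros [Q [M1 [M2 [HM1 [HM2 [<- [<- [HS1 HS2]]]]]]]] Hr Hz Hzy Hprem.
  exists (M1 G''); split; [apply HS1|]. split; [now rewrite HM1, <- HM2|].
  destruct (HS1 G'') as [Hside _].
  assert (Hinv : forall Z, (forall v, In v (bound_vars Z) -> In v (bound_vars G)) ->
                 provable (plug (M1 G') Z) -> provable (plug (M1 G'') Z)).
  { intros Z HZ HP. rewrite HM1, <- HM2 in HP |- *.
    apply provable_inversion with G' z; auto.
    - apply wait_reduct_same_side with (M2 G); [apply (HS2 Z) | exact Hr].
    - rewrite HM2, <- HM1. intros Hb. apply Hz, occurs_of_bound.
      revert Hb; now apply bound_in_plug_mono. }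
  destruct Hprem as [[G0 [G1 [-> [P0 P1]]]]|[x [H [-> [Hy P]]]]].
  - left. exists G0, G1. split; [now apply wait_bin_same_side|].
    split; apply Hinv; auto; intros; apply bound_vars_wait_bin; auto.
  - right. exists x, H. split; [now apply wait_quant_same_side|]. split.
    + rewrite HM1, <- HM2. intros Ho.
      destruct (occurs_plug_mono (fun v => v = z) G' G''
                  (proj2 (proj2 (wait_reduct_vars_within _ _ _ _ Hr))) _ y Ho) as [Ho'| ->];
        [|now apply Hzy].
      apply Hy. now rewrite HM1, <- HM2.
    + apply Hinv; auto. intros v; rewrite bound_vars_subst. apply bound_vars_wait_quant.
Qed.

Lemma intro_admissible n L G y : seq_choice_count (plug L G) < n -> intro_pos L ->
  proper_seq (plug L G) -> intro_premises L G y -> provable (plug L G).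
Proof.
  revert L G y; induction n as [|n IH]; intros L G y Hn Hpos Hp Hprem; [lia|].
  destruct (fresh_var (plug L G) [y]) as [z [Hz Hzy]].
  assert (Hzy' : z <> y) by (intros ->; apply Hzy; now left).
  assert (Hchoice : is_choice G)
    by (destruct Hprem as [[G0 [G1 [-> _]]]|[x [H [-> _]]]];
        [apply wait_bin_is_choice | apply wait_quant_is_choice]).
  assert (Hother : forall L' G' G'', apart L G' L' G -> plug L G = plug L' G' ->
                     wait_reduct L' G' G'' z -> provable (plug L' G'')).
  { intros L' G' G'' Ha HX Hr.
    destruct (intro_premises_reduct L G y L' G' G'' z Ha Hr Hz Hzy' Hprem)
      as [L'' [[_ Hpos''] [HX'' Hprem'']]].
    rewrite HX''. apply (IH L'' G y); auto.
    - rewrite <- HX''. rewrite HX in Hn.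
      pose proof (seq_choice_count_plug_lt L' _ _ (wait_reduct_choice_count _ _ _ _ Hr)). lia.
    - now apply Hpos''.
    - rewrite <- HX''. rewrite HX in Hp, Hz.
      apply proper_plug_vars_within with G' z;
        [exact Hp | exact (wait_reduct_vars_within _ _ _ _ Hr)
        | intros Hb; now apply Hz, occurs_of_bound]. }
  apply provable_of_follows; auto. right; right. split; [|split].
  - intros L' A B HX.
    destruct (plug_eq_cases _ _ _ _ HX Hchoice (wait_bin_is_choice _ _ _)) as [[<- ->]|Ha].
    + destruct Hprem as [[G0 [G1 [HG [P0 P1]]]]|[x [H [HG _]]]].
      * now apply wait_bin_inj in HG as [-> ->].
      * now apply wait_bin_neq_quant in HG.
    + split; apply Hother with (wait_bin L' A B); auto; left; exists A, B; auto.
  - intros L' x' H' HX.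
    destruct (plug_eq_cases _ _ _ _ HX Hchoice (wait_quant_is_choice _ _ _)) as [[<- ->]|Ha].
    + destruct Hprem as [[G0 [G1 [HG _]]]|[x [H [HG [Hy P]]]]].
      * now apply eq_sym, wait_bin_neq_quant in HG.
      * apply wait_quant_inj in HG as [-> ->]. exists y; auto.
    + exists z; split; auto.
      apply Hother with (wait_quant L' x' H'); auto. right; exists x', H'; auto.
  - apply stable_plug; auto.
    destruct Hprem as [[G0 [G1 [-> _]]]|[x [H [-> _]]]];
      [apply elem_wait_bin | apply elem_wait_quant].
Qed.

Theorem fact11p2 :
  (* ⊓-Introduction *)
  (forall (Es : list form) (c : ctx) (G0 G1 : form),
     no_and c ->
     proper_seq (Es, fill c (Chand G0 G1)) ->
     provable (Es, fill c G0) ->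
     provable (Es, fill c G1) ->
     provable (Es, fill c (Chand G0 G1))) /\
  (* ⊔-Introduction *)
  (forall (Es : list form) (c : ctx) (G0 G1 : form) (Ks : list form) (H : form),
     no_or c ->
     proper_seq (Es ++ fill c (Chor G0 G1) :: Ks, H) ->
     provable (Es ++ fill c G0 :: Ks, H) ->
     provable (Es ++ fill c G1 :: Ks, H) ->
     provable (Es ++ fill c (Chor G0 G1) :: Ks, H)) /\
  (* ⊓x-Introduction *)
  (forall (Es : list form) (c : ctx) (x : nat) (G : form) (y : nat),
     no_and c ->
     proper_seq (Es, fill c (Chall x G)) ->
     ~ occurs_seq y (Es, fill c (Chall x G)) ->
     provable (Es, fill c (subst x (Var y) G)) ->
     provable (Es, fill c (Chall x G))) /\
  (* ⊔x-Introduction *)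
  (forall (Es : list form) (c : ctx) (x : nat) (G : form) (Ks : list form)
          (H : form) (y : nat),
     no_or c ->
     proper_seq (Es ++ fill c (Chex x G) :: Ks, H) ->
     ~ occurs_seq y (Es ++ fill c (Chex x G) :: Ks, H) ->
     provable (Es ++ fill c (subst x (Var y) G) :: Ks, H) ->
     provable (Es ++ fill c (Chex x G) :: Ks, H)).
Proof.
  split; [|split; [|split]].
  - intros Es c G0 G1 Hc Hp P0 P1.
    apply (intro_admissible _ (PSucc Es c) _ 0 (Nat.lt_succ_diag_r _)); auto.
    left; exists G0, G1; auto.
  - intros Es c G0 G1 Ks H Hc Hp P0 P1.
    apply (intro_admissible _ (PAnte Es Ks H c) _ 0 (Nat.lt_succ_diag_r _)); auto.
    left; exists G0, G1; auto.
  - intros Es c x G y Hc Hp Hy P.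
    apply (intro_admissible _ (PSucc Es c) _ y (Nat.lt_succ_diag_r _)); auto.
    right; exists x, G; auto.
  - intros Es c x G Ks H y Hc Hp Hy P.
    apply (intro_admissible _ (PAnte Es Ks H c) _ y (Nat.lt_succ_diag_r _)); auto.
    right; exists x, G; auto.
Qed.
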